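(* For all session types $S,T\in\mathcal{ST}$: $S\leq T$ (Gay–Hole subtyping) if and only if $\mathcal{M}(S)\sqsubseteq\mathcal{M}(T)$, where $\sqsubseteq$ is the peer subcontract preorder on higher-order session contracts.
   Context: Session types. Fix a set $BT$ of base types with a preorder $\leq_{\mathsf b}$ and a countable set $\mathcal L$ of labels. Session type terms: $T::=\mathsf{end}\mid ?[M]T\mid ![M]T\mid \&\langle l_1{:}T_1,\dots,l_n{:}T_n\rangle\mid \oplus\langle l_1{:}T_1,\dots,l_n{:}T_n\rangle\mid \mu X.T\mid X$ ($n\ge1$, labels distinct), with message types $M::=T\mid \mathtt t$, $\mathtt t\in BT$. A term is guarded if in every subterm $\mu X.T'$ every occurrence of $X$ in $T'$ lies under a constructor other than $\mu$; $\mathcal{ST}$ is the set of closed guarded terms. $\mathrm{unfold}(\mu X.T')=\mathrm{unfold}(T'[\mu X.T'/X])$, and $\mathrm{unfold}(T)=T$ otherwise. For $R\subseteq\mathcal{ST}^2$, $F_{\leq}(R)$ is the set of $(T,S)$ such that: if $\mathrm{unfold}(T)=\mathsf{end}$ then $\mathrm{unfold}(S)=\mathsf{end}$; if $\mathrm{unfold}(T)=?[\mathtt t_1]S_1$ then $\mathrm{unfold}(S)=?[\mathtt t_2]S_2$ with $S_1RS_2$, $\mathtt t_1\leq_{\mathsf b}\mathtt t_2$; if $\mathrm{unfold}(T)=![\mathtt t_1]S_1$ then $\mathrm{unfold}(S)=![\mathtt t_2]S_2$ with $S_1RS_2$, $\mathtt t_2\leq_{\mathsf b}\mathtt t_1$;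 if $\mathrm{unfold}(T)=![T_1]S_1$ then $\mathrm{unfold}(S)=![T_2]S_2$ with $S_1RS_2$, $T_2RT_1$; if $\mathrm{unfold}(T)=?[T_1]S_1$ then $\mathrm{unfold}(S)=?[T_2]S_2$ with $S_1RS_2$, $T_1RT_2$; if $\mathrm{unfold}(T)=\&\langle l_1{:}T_1,\dots,l_m{:}T_m\rangle$ then $\mathrm{unfold}(S)=\&\langle l_1{:}S_1,\dots,l_n{:}S_n\rangle$ with $m\le n$ and $T_iRS_i$ for $i\le m$; if $\mathrm{unfold}(T)=\oplus\langle l_1{:}T_1,\dots,l_m{:}T_m\rangle$ then $\mathrm{unfold}(S)=\oplus\langle l_1{:}S_1,\dots,l_n{:}S_n\rangle$ with $n\le m$ and $T_iRS_i$ for $i\le n$. Subtyping $\leq$ is the greatest $R$ with $R\subseteq F_\leq(R)$. Contracts. Contract terms: $\sigma::=\mathbf 1\mid ?\mathtt t.\sigma\mid !\mathtt t.\sigma\mid !(\sigma).\sigma\mid ?(\sigma).\sigma\mid \sum_{i\in I}?l_i.\sigma_i\mid \bigoplus_{i\in I}!l_i.\sigma_i\mid \mu x.\sigma\mid x$ ($I$ finite nonempty, labels distinct); $\mathcal{SC}$ is the set of closed guarded contract terms; unfold is defined as for types. Transitions: $\mathbf 1\xrightarrow{\checkmark}$; $\lambda.\sigma\xrightarrow{\lambda}\sigma$ for each prefix $\lambda\in\{?\mathtt t,!\mathtt t,?(\rho),!(\rho),!l\}$ (a one-branch internal sum $!l.\sigma$ is a prefix); $\bigoplus_{i\in I}!l_i.\sigma_i\xrightarrow{\tau}!l_i.\sigma_i$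 for each $i$ when $|I|>1$; $\sum_{i\in I}?l_i.\sigma_i\xrightarrow{?l_i}\sigma_i$; $\mu x.\sigma\xrightarrow{\tau}\sigma[\mu x.\sigma/x]$. For $B\subseteq\mathcal{SC}^2$, $\lambda_1\bowtie_B\lambda_2$ iff $(\lambda_1,\lambda_2)$ is $(!l,?l)$, $(?l,!l)$, $(!\mathtt t_1,?\mathtt t_2)$ with $\mathtt t_1\leq_{\mathsf b}\mathtt t_2$, $(?\mathtt t_1,!\mathtt t_2)$ with $\mathtt t_2\leq_{\mathsf b}\mathtt t_1$, $(!(\sigma_1),?(\sigma_2))$ with $\sigma_1B\sigma_2$, or $(?(\sigma_1),!(\sigma_2))$ with $\sigma_2B\sigma_1$. Then $\rho\|\sigma\xrightarrow{\tau}_B\rho'\|\sigma$ if $\rho\xrightarrow\tau\rho'$; $\rho\|\sigma\xrightarrow\tau_B\rho\|\sigma'$ if $\sigma\xrightarrow\tau\sigma'$; $\rho\|\sigma\xrightarrow\tau_B\rho'\|\sigma'$ if $\rho\xrightarrow{\lambda_1}\rho'$, $\sigma\xrightarrow{\lambda_2}\sigma'$, $\lambda_1\bowtie_B\lambda_2$. $B$-peer compliance $\dashv_B$ is the greatest $R\subseteq\mathcal{SC}^2$ such that whenever $\rho R\sigma$: if $\rho\|\sigma$ has no $\xrightarrow\tau_B$ move then $\rho\xrightarrow\checkmark$ and $\sigma\xrightarrow\checkmark$; and if $\rho\|\sigma\xrightarrow\tau_B\rho'\|\sigma'$ then $\rho'R\sigma'$. $\sigma_1\sqsubseteq_B\sigma_2$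 iff for all $\rho\in\mathcal{SC}$, $\rho\dashv_B\sigma_1$ implies $\rho\dashv_B\sigma_2$. The peer subcontract preorder $\sqsubseteq$ is the greatest fixed point of the monotone map $B\mapsto\sqsubseteq_B$ on the complete lattice of preorders on $\mathcal{SC}$ ordered by inclusion. Translation $\mathcal M$: $\mathcal M(\mathsf{end})=\mathbf 1$, $\mathcal M(![\mathtt t]S)=!\mathtt t.\mathcal M(S)$, $\mathcal M(?[\mathtt t]S)=?\mathtt t.\mathcal M(S)$, $\mathcal M(![T]S)=!(\mathcal M(T)).\mathcal M(S)$, $\mathcal M(?[T]S)=?(\mathcal M(T)).\mathcal M(S)$, $\mathcal M(\&\langle l_i{:}S_i\rangle)=\sum_i ?l_i.\mathcal M(S_i)$, $\mathcal M(\oplus\langle l_i{:}S_i\rangle)=\bigoplus_i !l_i.\mathcal M(S_i)$, $\mathcal M(\mu X.S)=\mu x.\mathcal M(S)$, $\mathcal M(X)=x$. *)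

From Stdlib Require Import List Arith RelationClasses.
Import ListNotations.
Set Implicit Arguments.

Definition label := nat.
Definition tvar := nat.

(* Session type terms; message types M ::= T | t are split into the *)
(* constructors ...B (base-type message) and ...S (session message). *)
Inductive st (BT : Type) : Type :=
| TEnd
| TInB (t : BT) (s : st BT)
| TOutB (t : BT) (s : st BT)
| TInS (m s : st BT)
| TOutS (m s : st BT)
| TBra (bs : list (label * st BT))
| TSel (bs : list (label * st BT))
| TMu (x : tvar) (s : st BT)
| TVar (x : tvar).
Arguments TEnd {BT}.
Arguments TVar {BT}.

Fixpoint st_subst BT (x : tvar) (u t : st BT) : st BT :=
  match t with
  | TEnd => TEnd
  | TInB b s => TInB b (st_subst x u s)
  | TOutB b s => TOutB b (st_subst x u s)
  | TInS m s => TInS (st_subst x u m) (st_subst x u s)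
  | TOutS m s => TOutS (st_subst x u m) (st_subst x u s)
  | TBra bs => TBra (map (fun p => (fst p, st_subst x u (snd p))) bs)
  | TSel bs => TSel (map (fun p => (fst p, st_subst x u (snd p))) bs)
  | TMu y s => if Nat.eqb x y then TMu y s else TMu y (st_subst x u s)
  | TVar y => if Nat.eqb x y then u else TVar y
  end.

Fixpoint st_fv BT (t : st BT) : list tvar :=
  match t with
  | TEnd => []
  | TInB _ s | TOutB _ s => st_fv s
  | TInS m s | TOutS m s => st_fv m ++ st_fv s
  | TBra bs | TSel bs => flat_map (fun p => st_fv (snd p)) bs
  | TMu y s => remove Nat.eq_dec y (st_fv s)
  | TVar y => [y]
  end.

(* x occurs in t reachable through mu-constructors only (i.e. unguarded) *)
Fixpoint st_ug BT (x : tvar) (t : st BT) : Prop :=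
  match t with
  | TVar y => y = x
  | TMu y s => y <> x /\ st_ug x s
  | _ => False
  end.

Fixpoint st_ok BT (t : st BT) : Prop :=
  match t with
  | TEnd => True
  | TInB _ s | TOutB _ s => st_ok s
  | TInS m s | TOutS m s => st_ok m /\ st_ok s
  | TBra bs | TSel bs =>
      bs <> [] /\ NoDup (map fst bs) /\
      fold_right (fun p acc => st_ok (snd p) /\ acc) True bs
  | TMu y s => ~ st_ug y s /\ st_ok s
  | TVar _ => True
  end.

Definition ST BT (t : st BT) : Prop := st_fv t = [] /\ st_ok t.

Fixpoint mu_depth BT (t : st BT) : nat :=
  match t with TMu _ s => S (mu_depth s) | _ => 0 end.

Fixpoint st_unfold_n BT (n : nat) (t : st BT) : st BT :=
  match n with
  | 0 => t
  | S n => match t with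
           | TMu x s => st_unfold_n n (st_subst x (TMu x s) s)
           | _ => t
           end
  end.

(* unfold(mu X.T') = unfold(T'[mu X.T'/X]); unfold(T) = T otherwise.
   On guarded closed terms exactly mu_depth t unfoldings are needed. *)
Definition st_unfold BT (t : st BT) : st BT := st_unfold_n (mu_depth t) t.

Definition F_le BT (leb : BT -> BT -> Prop) (R : st BT -> st BT -> Prop)
    (T S : st BT) : Prop :=
  ST T /\ ST S /\
  match st_unfold T with
  | TEnd => st_unfold S = TEnd
  | TInB t1 S1 => exists t2 S2, st_unfold S = TInB t2 S2 /\ R S1 S2 /\ leb t1 t2
  | TOutB t1 S1 => exists t2 S2, st_unfold S = TOutB t2 S2 /\ R S1 S2 /\ leb t2 t1
  | TOutS T1 S1 => exists T2 S2, st_unfold S = TOutS T2 S2 /\ R S1 S2 /\ R T2 T1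
  | TInS T1 S1 => exists T2 S2, st_unfold S = TInS T2 S2 /\ R S1 S2 /\ R T1 T2
  | TBra bs => exists bs', st_unfold S = TBra bs' /\
      forall l Ti, In (l, Ti) bs -> exists Si, In (l, Si) bs' /\ R Ti Si
  | TSel bs => exists bs', st_unfold S = TSel bs' /\
      forall l Si, In (l, Si) bs' -> exists Ti, In (l, Ti) bs /\ R Ti Si
  | _ => True
  end.

Definition subtype BT (leb : BT -> BT -> Prop) (T S : st BT) : Prop :=
  exists R : st BT -> st BT -> Prop,
    (forall a b, R a b -> F_le leb R a b) /\ R T S.

Inductive ct (BT : Type) : Type :=
| C1
| CInB (t : BT) (s : ct BT)
| COutB (t : BT) (s : ct BT)
| CInC (c s : ct BT)
| COutC (c s : ct BT)
| CExt (bs : list (label * ct BT))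
| CInt (bs : list (label * ct BT))
| CMu (x : tvar) (s : ct BT)
| CVar (x : tvar).
Arguments C1 {BT}.
Arguments CVar {BT}.

Fixpoint ct_subst BT (x : tvar) (u t : ct BT) : ct BT :=
  match t with
  | C1 => C1
  | CInB b s => CInB b (ct_subst x u s)
  | COutB b s => COutB b (ct_subst x u s)
  | CInC m s => CInC (ct_subst x u m) (ct_subst x u s)
  | COutC m s => COutC (ct_subst x u m) (ct_subst x u s)
  | CExt bs => CExt (map (fun p => (fst p, ct_subst x u (snd p))) bs)
  | CInt bs => CInt (map (fun p => (fst p, ct_subst x u (snd p))) bs)
  | CMu y s => if Nat.eqb x y then CMu y s else CMu y (ct_subst x u s)
  | CVar y => if Nat.eqb x y then u else CVar y
  end.

Fixpoint ct_fv BT (t : ct BT) : list tvar :=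
  match t with
  | C1 => []
  | CInB _ s | COutB _ s => ct_fv s
  | CInC m s | COutC m s => ct_fv m ++ ct_fv s
  | CExt bs | CInt bs => flat_map (fun p => ct_fv (snd p)) bs
  | CMu y s => remove Nat.eq_dec y (ct_fv s)
  | CVar y => [y]
  end.

Fixpoint ct_ug BT (x : tvar) (t : ct BT) : Prop :=
  match t with
  | CVar y => y = x
  | CMu y s => y <> x /\ ct_ug x s
  | _ => False
  end.

Fixpoint ct_ok BT (t : ct BT) : Prop :=
  match t with
  | C1 => True
  | CInB _ s | COutB _ s => ct_ok s
  | CInC m s | COutC m s => ct_ok m /\ ct_ok s
  | CExt bs | CInt bs =>
      bs <> [] /\ NoDup (map fst bs) /\
      fold_right (fun p acc => ct_ok (snd p) /\ acc) True bs
  | CMu y s => ~ ct_ug y s /\ ct_ok s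
  | CVar _ => True
  end.

Definition SC BT (t : ct BT) : Prop := ct_fv t = [] /\ ct_ok t.

(* Actions (tau and visible prefixes; the tick is handled by [ticks]) *)
Inductive act (BT : Type) : Type :=
| ATau
| AInB (t : BT) | AOutB (t : BT)
| AInC (c : ct BT) | AOutC (c : ct BT)
| AInL (l : label) | AOutL (l : label).
Arguments ATau {BT}.
Arguments AInL {BT}.
Arguments AOutL {BT}.

Inductive cstep BT : ct BT -> act BT -> ct BT -> Prop :=
| cs_inb t s : cstep (CInB t s) (AInB t) s
| cs_outb t s : cstep (COutB t s) (AOutB t) s
| cs_inc c s : cstep (CInC c s) (AInC c) s
| cs_outc c s : cstep (COutC c s) (AOutC c) s
| cs_outl l s : cstep (CInt [(l, s)]) (AOutL l) s
| cs_int bs l s : 1 < length bs -> In (l, s) bs -> cstep (CInt bs) ATau (CInt [(l, s)])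
| cs_ext bs l s : In (l, s) bs -> cstep (CExt bs) (AInL l) s
| cs_mu x s : cstep (CMu x s) ATau (ct_subst x (CMu x s) s).

Definition ticks BT (s : ct BT) : Prop := s = C1.

Definition bowtie BT (leb : BT -> BT -> Prop) (B : ct BT -> ct BT -> Prop)
    (a1 a2 : act BT) : Prop :=
  match a1, a2 with
  | AOutL l1, AInL l2 => l1 = l2
  | AInL l1, AOutL l2 => l1 = l2
  | AOutB t1, AInB t2 => leb t1 t2
  | AInB t1, AOutB t2 => leb t2 t1
  | AOutC s1, AInC s2 => B s1 s2
  | AInC s1, AOutC s2 => B s2 s1
  | _, _ => False
  end.

Inductive pstep BT (leb : BT -> BT -> Prop) (B : ct BT -> ct BT -> Prop)
  : ct BT -> ct BT -> ct BT -> ct BT -> Prop :=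
| ps_l r s r' : cstep r ATau r' -> pstep leb B r s r' s
| ps_r r s s' : cstep s ATau s' -> pstep leb B r s r s'
| ps_sync r s r' s' a1 a2 :
    cstep r a1 r' -> cstep s a2 s' -> bowtie leb B a1 a2 -> pstep leb B r s r' s'.

Definition compliant BT (leb : BT -> BT -> Prop) (B : ct BT -> ct BT -> Prop)
    (rho sigma : ct BT) : Prop :=
  exists R : ct BT -> ct BT -> Prop,
    (forall a b, R a b ->
       SC a /\ SC b /\
       ((~ exists a' b', pstep leb B a b a' b') -> ticks a /\ ticks b) /\
       (forall a' b', pstep leb B a b a' b' -> R a' b')) /\
    R rho sigma.

Definition subc_B BT (leb : BT -> BT -> Prop) (B : ct BT -> ct BT -> Prop)
    (s1 s2 : ct BT) : Prop :=
  SC s1 /\ SC s2 /\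
  forall rho, SC rho -> compliant leb B rho s1 -> compliant leb B rho s2.

Definition preorder_on_SC BT (B : ct BT -> ct BT -> Prop) : Prop :=
  (forall a b, B a b -> SC a /\ SC b) /\
  (forall a, SC a -> B a a) /\
  (forall a b c, B a b -> B b c -> B a c).

(* Peer subcontract preorder: greatest fixed point of B |-> [=_B in the
   lattice of preorders on SC (= union of post-fixed preorders, Knaster-Tarski) *)
Definition peer_sub BT (leb : BT -> BT -> Prop) (s1 s2 : ct BT) : Prop :=
  exists B : ct BT -> ct BT -> Prop,
    preorder_on_SC B /\ (forall a b, B a b -> subc_B leb B a b) /\ B s1 s2.

Fixpoint trM BT (t : st BT) : ct BT :=
  match t with
  | TEnd => C1
  | TOutB b s => COutB b (trM s)
  | TInB b s => CInB b (trM s)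
  | TOutS m s => COutC (trM m) (trM s)
  | TInS m s => CInC (trM m) (trM s)
  | TBra bs => CExt (map (fun p => (fst p, trM (snd p))) bs)
  | TSel bs => CInt (map (fun p => (fst p, trM (snd p))) bs)
  | TMu x s => CMu x (trM s)
  | TVar x => CVar x
  end.

From Stdlib Require Import List Arith RelationClasses Classical Lia Relation_Operators.
Import ListNotations.
Set Implicit Arguments.

(* Both directions pass through [F_ct], the image under M of the functional [F_le] on
   unfolded contracts.

   If a relation [Q] between contracts is a post-fixed point of [F_ct] contained in a
   transitive [B], then every [B]-compliant partner of [s] is one of [t] whenever [Q s t]:
   each synchronisation of the partner with [t] is matched by one with [s], the heads being
   [F_ct]-related.  Applied to the translations of Gay-Hole subtype pairs (closed under
   reflexivity and transitivity), this exhibits a preorder [B] with [B] included in [[=_B],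
   whence [M(S) [= M(T)].

   Conversely, for any such preorder [B], [s [=_B t] forces [F_ct] between the heads of [s]
   and [t], with [[=_B] for the continuations.  This is shown by probing [s] with partners
   built from duals ([dual x] is always compliant with [x]): a probe doing the co-action of
   the head of [s] and continuing as [dual x] must also synchronise with [t], which reveals
   the head of [t], and the same probe continued as any partner of [x] shows that this
   partner also complies with the continuation of [t].  Pulling back along M, the pairs of
   session types whose translations are so related form a post-fixed point of [F_le]. *)

Section NestedInduction.
Variable BT : Type.

Section CtNestedInd.
Variable P : ct BT -> Prop.
Hypothesis P_C1 : P C1.
Hypothesis P_CInB : forall b s, P s -> P (CInB b s).
Hypothesis P_COutB : forall b s, P s -> P (COutB b s).
Hypothesis P_CInC : forall c s, P c -> P s -> P (CInC c s).
Hypothesis P_COutC : forall c s, P c -> P s -> P (COutC c s).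
Hypothesis P_CExt : forall bs, Forall (fun p => P (snd p)) bs -> P (CExt bs).
Hypothesis P_CInt : forall bs, Forall (fun p => P (snd p)) bs -> P (CInt bs).
Hypothesis P_CMu : forall x s, P s -> P (CMu x s).
Hypothesis P_CVar : forall x, P (CVar x).

Fixpoint ct_nested_ind (t : ct BT) : P t :=
  let branches := fix go (l : list (label * ct BT)) : Forall (fun p => P (snd p)) l :=
       match l with
       | [] => Forall_nil _
       | (a, s) :: l' => @Forall_cons _ (fun p => P (snd p)) (a, s) l' (ct_nested_ind s) (go l')
       end in
  match t with
  | C1 => P_C1
  | CInB b s => P_CInB b (ct_nested_ind s)
  | COutB b s => P_COutB b (ct_nested_ind s)
  | CInC c s => P_CInC (ct_nested_ind c) (ct_nested_ind s)
  | COutC c s => P_COutC (ct_nested_ind c) (ct_nested_ind s)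
  | CExt bs => P_CExt (branches bs)
  | CInt bs => P_CInt (branches bs)
  | CMu x s => P_CMu x (ct_nested_ind s)
  | CVar x => P_CVar x
  end.
End CtNestedInd.

Section StNestedInd.
Variable P : st BT -> Prop.
Hypothesis P_TEnd : P TEnd.
Hypothesis P_TInB : forall b s, P s -> P (TInB b s).
Hypothesis P_TOutB : forall b s, P s -> P (TOutB b s).
Hypothesis P_TInS : forall c s, P c -> P s -> P (TInS c s).
Hypothesis P_TOutS : forall c s, P c -> P s -> P (TOutS c s).
Hypothesis P_TBra : forall bs, Forall (fun p => P (snd p)) bs -> P (TBra bs).
Hypothesis P_TSel : forall bs, Forall (fun p => P (snd p)) bs -> P (TSel bs).
Hypothesis P_TMu : forall x s, P s -> P (TMu x s).
Hypothesis P_TVar : forall x, P (TVar x).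

Fixpoint st_nested_ind (t : st BT) : P t :=
  let branches := fix go (l : list (label * st BT)) : Forall (fun p => P (snd p)) l :=
       match l with
       | [] => Forall_nil _
       | (a, s) :: l' => @Forall_cons _ (fun p => P (snd p)) (a, s) l' (st_nested_ind s) (go l')
       end in
  match t with
  | TEnd => P_TEnd
  | TInB b s => P_TInB b (st_nested_ind s)
  | TOutB b s => P_TOutB b (st_nested_ind s)
  | TInS c s => P_TInS (st_nested_ind c) (st_nested_ind s)
  | TOutS c s => P_TOutS (st_nested_ind c) (st_nested_ind s)
  | TBra bs => P_TBra (branches bs)
  | TSel bs => P_TSel (branches bs)
  | TMu x s => P_TMu x (st_nested_ind s)
  | TVar x => P_TVar x
  end.
End StNestedInd.

End NestedInduction.
Lemma fold_right_and_Forall (A : Type) (Q : A -> Prop) (l : list A) :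
  fold_right (fun p acc => Q p /\ acc) True l <-> Forall Q l.
Proof.
  induction l; simpl; split; intros H; auto.
  - destruct H; constructor; tauto.
  - inversion H; subst; tauto.
Qed.

Lemma nil_iff_no_In (A : Type) (l : list A) : l = [] <-> forall z, ~ In z l.
Proof.
  split; intros H; subst; auto.
  destruct l as [|a l]; auto. exfalso; apply (H a); simpl; auto.
Qed.

Lemma In_NoDup_fst_unique (A : Type) (bs : list (label * A)) l x y :
  NoDup (map fst bs) -> In (l, x) bs -> In (l, y) bs -> x = y.
Proof.
  induction bs as [|[l0 a] bs IH]; simpl; intros Hn H1 H2; [contradiction|].
  apply NoDup_cons_iff in Hn as [Hn1 Hn2].
  destruct H1 as [H1|H1]; destruct H2 as [H2|H2].
  - inversion H1; inversion H2; subst; auto.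
  - inversion H1; subst. exfalso; apply Hn1. apply in_map_iff. exists (l, y); auto.
  - inversion H2; subst. exfalso; apply Hn1. apply in_map_iff. exists (l, x); auto.
  - auto.
Qed.

Lemma map_fst_map_snd (A B : Type) (f : A -> B) (bs : list (label * A)) :
  map fst (map (fun p => (fst p, f (snd p))) bs) = map fst bs.
Proof. rewrite map_map; reflexivity. Qed.

Lemma map_neq_nil (A B : Type) (f : A -> B) l : l <> [] -> map f l <> [].
Proof. destruct l; simpl; congruence. Qed.

Lemma In_remove_iff y x (l : list tvar) : In y (remove Nat.eq_dec x l) <-> In y l /\ y <> x.
Proof. split; [apply in_remove|intros [A B]; apply in_in_remove; auto]. Qed.

Section ContractSyntax.
Variable BT : Type.
Notation ctb := (ct BT).

Lemma ct_ug_In_fv x (t : ctb) : ct_ug x t -> In x (ct_fv t).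
Proof.
  induction t; simpl; try tauto.
  intros [H1 H2]; apply in_in_remove; auto.
Qed.

Lemma ct_fv_subst x (u t : ctb) z :
  In z (ct_fv (ct_subst x u t)) -> (In z (ct_fv t) /\ z <> x) \/ In z (ct_fv u).
Proof.
  revert z. induction t using ct_nested_ind; simpl; intros z Hz; auto; try contradiction.
  1-2: rewrite in_app_iff in *;
       destruct Hz as [Hz|Hz]; [destruct (IHt1 _ Hz)|destruct (IHt2 _ Hz)]; tauto.
  1-2: apply in_flat_map in Hz as [p [Hp Hz]]; apply in_map_iff in Hp as [q [<- Hq]];
       rewrite Forall_forall in H; destruct (H q Hq z Hz) as [[A B]|A]; auto;
       left; split; auto; apply in_flat_map; eauto.
  - destruct (Nat.eqb_spec x x0); simpl in Hz; rewrite In_remove_iff in Hz |- *.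
    + subst. tauto.
    + destruct Hz as [Hz Hne]. destruct (IHt _ Hz); tauto.
  - destruct (Nat.eqb_spec x x0); auto. simpl in Hz. destruct Hz as [<-|[]]. left; auto.
Qed.

Lemma ct_ug_subst x (u t : ctb) y :
  ct_fv u = [] -> ct_ug y (ct_subst x u t) -> ct_ug y t.
Proof.
  intros Hu. induction t; simpl; auto.
  - destruct (Nat.eqb_spec x x0); simpl; tauto.
  - destruct (Nat.eqb_spec x x0); simpl; auto.
    intros H. apply ct_ug_In_fv in H. rewrite Hu in H. contradiction.
Qed.

Lemma ct_ok_CExt (bs : list (label * ctb)) :
  ct_ok (CExt bs) <-> bs <> [] /\ NoDup (map fst bs) /\ Forall (fun p => ct_ok (snd p)) bs.
Proof. simpl. rewrite (@fold_right_and_Forall _ (fun p => ct_ok (snd p))). tauto. Qed.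

Lemma ct_ok_CInt (bs : list (label * ctb)) :
  ct_ok (CInt bs) <-> bs <> [] /\ NoDup (map fst bs) /\ Forall (fun p => ct_ok (snd p)) bs.
Proof. simpl. rewrite (@fold_right_and_Forall _ (fun p => ct_ok (snd p))). tauto. Qed.

Lemma ct_ok_map_branches (f : ctb -> ctb) (bs : list (label * ctb)) :
  (forall p, In p bs -> ct_ok (snd p) -> ct_ok (f (snd p))) ->
  bs <> [] /\ NoDup (map fst bs) /\ Forall (fun p => ct_ok (snd p)) bs ->
  let bs' := map (fun p => (fst p, f (snd p))) bs in
  bs' <> [] /\ NoDup (map fst bs') /\ Forall (fun p => ct_ok (snd p)) bs'.
Proof.
  intros Hf [A [B C]]; simpl. rewrite map_fst_map_snd.
  split; [apply map_neq_nil; auto|split; auto].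
  apply Forall_map. rewrite Forall_forall in *. intros p Hp; apply Hf; auto.
Qed.

Lemma ct_ok_subst x (u t : ctb) :
  ct_ok u -> ct_fv u = [] -> ct_ok t -> ct_ok (ct_subst x u t).
Proof.
  intros Hu Hf. induction t using ct_nested_ind; intros Ht.
  1-5: simpl in *; tauto.
  1-2: rewrite Forall_forall in H; simpl ct_subst;
       first [rewrite ct_ok_CExt in * | rewrite ct_ok_CInt in *];
       apply ct_ok_map_branches; auto.
  - simpl in *. destruct Ht as [A B]. destruct (Nat.eqb_spec x x0); simpl; auto.
    split; auto. intros C. apply A. eapply ct_ug_subst; eauto.
  - simpl. destruct (Nat.eqb_spec x x0); simpl; auto.
Qed.

Lemma SC_unfold x (s : ctb) : SC (CMu x s) -> SC (ct_subst x (CMu x s) s).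
Proof.
  intros [Hf Ho]. split.
  - apply nil_iff_no_In. intros z Hz. apply ct_fv_subst in Hz as [[A B]|A].
    + assert (In z (ct_fv (CMu x s))) by (simpl; apply in_in_remove; auto).
      rewrite Hf in H; auto.
    + rewrite Hf in A; auto.
  - apply ct_ok_subst; auto. apply Ho.
Qed.

Fixpoint ct_depth (t : ctb) : nat := match t with CMu _ s => S (ct_depth s) | _ => 0 end.

Fixpoint ct_unfold_n (n : nat) (t : ctb) : ctb :=
  match n with
  | 0 => t
  | S n => match t with CMu x s => ct_unfold_n n (ct_subst x (CMu x s) s) | _ => t end
  end.

Definition ct_unfold (t : ctb) := ct_unfold_n (ct_depth t) t.

Lemma ct_depth_subst x (u s : ctb) : ~ ct_ug x s -> ct_depth (ct_subst x u s) = ct_depth s.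
Proof.
  induction s; simpl; intros H; auto.
  - destruct (Nat.eqb_spec x x0); simpl; auto. f_equal. apply IHs. intros C; apply H; auto.
  - destruct (Nat.eqb_spec x x0); simpl; auto. exfalso; auto.
Qed.

Lemma ct_unfold_mu x (s : ctb) : ct_ok (CMu x s) ->
  ct_unfold (CMu x s) = ct_unfold (ct_subst x (CMu x s) s).
Proof. intros [H _]. unfold ct_unfold. simpl. rewrite ct_depth_subst; auto. Qed.

Inductive unfolds_to : ctb -> ctb -> Prop :=
| unfolds_refl s : unfolds_to s s
| unfolds_mu x b t : unfolds_to (ct_subst x (CMu x b) b) t -> unfolds_to (CMu x b) t.

Definition not_mu (t : ctb) := forall x b, t <> CMu x b.

Lemma not_mu_or_mu (t : ctb) : (exists x b, t = CMu x b) \/ not_mu t.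
Proof. destruct t; try (right; intros ? ? ?; discriminate). left; eauto. Qed.

Lemma ct_unfold_not_mu (t : ctb) : not_mu t -> ct_unfold t = t.
Proof. destruct t; intros H; try reflexivity. exfalso; eapply H; eauto. Qed.

Lemma unfolds_to_SC (s t : ctb) : unfolds_to s t -> SC s -> SC t.
Proof. induction 1; auto. intros Hs; apply IHunfolds_to, SC_unfold; auto. Qed.

Lemma SC_not_var y : ~ SC (@CVar BT y).
Proof. intros [F _]. discriminate. Qed.

Lemma ct_unfold_spec (t : ctb) : SC t -> unfolds_to t (ct_unfold t) /\ not_mu (ct_unfold t).
Proof.
  remember (ct_depth t) as n eqn:Hd. revert t Hd.
  induction n; intros t Hd Hs.
  - destruct t; simpl in Hd; try discriminate; unfold ct_unfold; simpl;
      (split; [constructor|intros ? ? ?; discriminate]).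
  - destruct t; simpl in Hd; try discriminate. injection Hd as Hd.
    rewrite ct_unfold_mu by apply Hs.
    destruct (IHn (ct_subst x (CMu x t) t)) as [A C].
    + rewrite ct_depth_subst; auto. apply Hs.
    + apply SC_unfold; auto.
    + split; auto. constructor; auto.
Qed.

Lemma SC_ct_unfold (t : ctb) : SC t -> SC (ct_unfold t).
Proof. intros Hs. exact (unfolds_to_SC (proj1 (ct_unfold_spec Hs)) Hs). Qed.

End ContractSyntax.

Section Translation.
Variable BT : Type.

Lemma st_ok_TBra (bs : list (label * st BT)) :
  st_ok (TBra bs) <-> bs <> [] /\ NoDup (map fst bs) /\ Forall (fun p => st_ok (snd p)) bs.
Proof. simpl. rewrite (@fold_right_and_Forall _ (fun p => st_ok (snd p))). tauto. Qed.

Lemma st_ok_TSel (bs : list (label * st BT)) :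
  st_ok (TSel bs) <-> bs <> [] /\ NoDup (map fst bs) /\ Forall (fun p => st_ok (snd p)) bs.
Proof. simpl. rewrite (@fold_right_and_Forall _ (fun p => st_ok (snd p))). tauto. Qed.

Lemma trM_subst x (u t : st BT) : trM (st_subst x u t) = ct_subst x (trM u) (trM t).
Proof.
  induction t using st_nested_ind; simpl; try congruence.
  1-2: f_equal; rewrite !map_map; apply map_ext_Forall; eapply Forall_impl; [|exact H];
       intros p Hp; simpl; rewrite Hp; reflexivity.
  all: destruct (Nat.eqb x x0); simpl; congruence.
Qed.

Lemma trM_fv (t : st BT) : ct_fv (trM t) = st_fv t.
Proof.
  induction t using st_nested_ind; simpl; try congruence.
  all: induction H as [|[l s] bs Hs _ IH]; simpl in *; congruence.
Qed.

Lemma trM_ug x (t : st BT) : ct_ug x (trM t) <-> st_ug x t.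
Proof. induction t; simpl; try rewrite IHt; tauto. Qed.

Lemma trM_ok (t : st BT) : ct_ok (trM t) <-> st_ok t.
Proof.
  induction t using st_nested_ind.
  1-5: simpl in *; tauto.
  1-2: simpl trM; first [rewrite ct_ok_CExt, st_ok_TBra | rewrite ct_ok_CInt, st_ok_TSel];
       rewrite map_fst_map_snd, Forall_map; simpl;
       assert (E : map (fun p => (fst p, trM (snd p))) bs <> [] <-> bs <> [])
         by (destruct bs; simpl; split; congruence);
       rewrite E; rewrite Forall_forall in H;
       split; intros [A [B C]]; (split; [auto|split; [auto|]]);
       rewrite Forall_forall in *; intros p Hp; apply H; auto.
  - simpl. rewrite IHt, trM_ug. tauto.
  - simpl; tauto.
Qed.

Lemma ST_iff_SC_trM (t : st BT) : ST t <-> SC (trM t).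
Proof. unfold ST, SC. rewrite trM_fv, trM_ok. tauto. Qed.

Lemma trM_depth (t : st BT) : ct_depth (trM t) = mu_depth t.
Proof. induction t; simpl; auto. Qed.

Lemma trM_unfold_n n : forall t : st BT, trM (st_unfold_n n t) = ct_unfold_n n (trM t).
Proof.
  induction n; intros t; simpl; auto.
  destruct t; simpl; auto. rewrite IHn, trM_subst. reflexivity.
Qed.

Lemma trM_unfold (t : st BT) : trM (st_unfold t) = ct_unfold (trM t).
Proof. unfold st_unfold, ct_unfold. rewrite trM_depth. apply trM_unfold_n. Qed.

Lemma In_map_trM l x (bs : list (label * st BT)) :
  In (l, x) (map (fun p => (fst p, trM (snd p))) bs) <-> exists X, In (l, X) bs /\ x = trM X.
Proof.
  split.
  - intros H. apply in_map_iff in H as [[l0 X] [E H]]. simpl in E. injection E as <- <-. eauto.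
  - intros [X [H ->]]. apply in_map_iff. exists (l, X); auto.
Qed.

End Translation.

Section Duality.
Variable BT : Type.
Notation ctb := (ct BT).

Definition env_upd (g : tvar -> ctb) x v := fun y => if Nat.eqb x y then v else g y.
Definition env_id : tvar -> ctb := fun y => CVar y.

Fixpoint ct_psubst (g : tvar -> ctb) (t : ctb) : ctb :=
  match t with
  | C1 => C1
  | CInB b s => CInB b (ct_psubst g s)
  | COutB b s => COutB b (ct_psubst g s)
  | CInC c s => CInC (ct_psubst g c) (ct_psubst g s)
  | COutC c s => COutC (ct_psubst g c) (ct_psubst g s)
  | CExt bs => CExt (map (fun p => (fst p, ct_psubst g (snd p))) bs)
  | CInt bs => CInt (map (fun p => (fst p, ct_psubst g (snd p))) bs)
  | CMu x s => CMu x (ct_psubst (env_upd g x (CVar x)) s)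
  | CVar x => g x
  end.

(* Messages are not dualised, so a recursion variable occurring inside a message must keep
   denoting the original recursive contract: [g] maps it to that contract, while a variable in
   continuation position stays bound by the dual recursion. *)
Fixpoint dual_env (g : tvar -> ctb) (t : ctb) : ctb :=
  match t with
  | C1 => C1
  | CInB b s => COutB b (dual_env g s)
  | COutB b s => CInB b (dual_env g s)
  | CInC c s => COutC (ct_psubst g c) (dual_env g s)
  | COutC c s => CInC (ct_psubst g c) (dual_env g s)
  | CExt bs => CInt (map (fun p => (fst p, dual_env g (snd p))) bs)
  | CInt bs => CExt (map (fun p => (fst p, dual_env g (snd p))) bs)
  | CMu x s => CMu x (dual_env (env_upd g x (ct_psubst g (CMu x s))) s)
  | CVar x => CVar x
  end.

Definition dual (t : ctb) := dual_env env_id t.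

Lemma In_fv_branch (bs : list (label * ctb)) l s y :
  In (l, s) bs -> In y (ct_fv s) -> In y (flat_map (fun p => ct_fv (snd p)) bs).
Proof. intros Hs Hy. apply in_flat_map. exists (l, s); auto. Qed.

Lemma ct_psubst_ext (t : ctb) : forall g g', (forall y, In y (ct_fv t) -> g y = g' y) ->
  ct_psubst g t = ct_psubst g' t.
Proof.
  induction t using ct_nested_ind; intros g g' E; simpl in *; auto.
  1-2: f_equal; auto.
  1-2: f_equal; [apply IHt1|apply IHt2]; intros; apply E; apply in_app_iff; auto.
  1-2: f_equal; apply map_ext_in; intros [l s] Hp; rewrite Forall_forall in H; simpl;
       f_equal; apply (H _ Hp); intros y Hy; apply E; eapply In_fv_branch; eauto.
  - f_equal. apply IHt. intros y Hy. unfold env_upd. destruct (Nat.eqb_spec x y); auto.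
    apply E. apply In_remove_iff; auto.
Qed.

Lemma ct_psubst_id (t : ctb) : ct_psubst env_id t = t.
Proof.
  induction t using ct_nested_ind; simpl; try congruence.
  1-2: f_equal; rewrite <- (map_id bs) at 2; apply map_ext_in; intros [l s] Hp;
       rewrite Forall_forall in H; simpl; f_equal; apply (H _ Hp).
  - f_equal. rewrite <- IHt at 2. apply ct_psubst_ext. intros y _. unfold env_upd, env_id.
    destruct (Nat.eqb_spec x y); subst; auto.
  - reflexivity.
Qed.

Lemma ct_psubst_closed g (t : ctb) : ct_fv t = [] -> ct_psubst g t = t.
Proof.
  intros H. rewrite <- (ct_psubst_id t) at 2. apply ct_psubst_ext.
  intros y Hy; rewrite H in Hy; contradiction.
Qed.

Lemma ct_psubst_fv (t : ctb) : forall g z, In z (ct_fv (ct_psubst g t)) ->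
  exists y, In y (ct_fv t) /\ In z (ct_fv (g y)).
Proof.
  induction t using ct_nested_ind; intros g z Hz; simpl in *; try contradiction.
  1-2: apply (IHt g z Hz).
  1-2: apply in_app_iff in Hz as [Hz|Hz];
       [destruct (IHt1 g z Hz) as [y [A B]]|destruct (IHt2 g z Hz) as [y [A B]]];
       exists y; rewrite in_app_iff; auto.
  1-2: apply in_flat_map in Hz as [p [Hp Hz]]; apply in_map_iff in Hp as [q [<- Hq]];
       rewrite Forall_forall in H; destruct (H q Hq g z Hz) as [y [A B]];
       exists y; split; auto; apply in_flat_map; eauto.
  - apply In_remove_iff in Hz as [Hz Hne]. destruct (IHt _ _ Hz) as [y [A B]].
    unfold env_upd in B. destruct (Nat.eqb_spec x y).
    + simpl in B. destruct B as [B|[]]; congruence.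
    + exists y; split; auto. apply In_remove_iff; auto.
  - exists x; auto.
Qed.

Lemma ct_psubst_subst (t : ctb) : forall g x u, ct_fv u = [] ->
  ct_psubst g (ct_subst x u t) = ct_psubst (env_upd g x u) t.
Proof.
  induction t using ct_nested_ind; intros g y u Hu; simpl; try (f_equal; auto; fail).
  1-2: f_equal; rewrite map_map; apply map_ext_in; intros [l s] Hp;
       rewrite Forall_forall in H; simpl; f_equal; apply (H _ Hp); auto.
  - destruct (Nat.eqb_spec y x); simpl.
    + subst. f_equal. apply ct_psubst_ext. intros z _. unfold env_upd.
      destruct (Nat.eqb_spec x z); auto.
    + f_equal. rewrite IHt by auto. apply ct_psubst_ext. intros z _. unfold env_upd.
      destruct (Nat.eqb_spec y z); destruct (Nat.eqb_spec x z); subst; auto; congruence.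
  - unfold env_upd. destruct (Nat.eqb_spec y x); simpl; auto.
    apply ct_psubst_closed; auto.
Qed.

Definition env_ok (g : tvar -> ctb) := forall y, g y = CVar y \/ SC (g y).

Lemma env_ok_id : env_ok env_id.
Proof. intros y; left; reflexivity. Qed.

Lemma env_ok_upd g x v : env_ok g -> (v = CVar x \/ SC v) -> env_ok (env_upd g x v).
Proof. intros G V y. unfold env_upd. destruct (Nat.eqb_spec x y); subst; auto. Qed.

Lemma ct_psubst_ug (t : ctb) : forall g y, env_ok g -> ct_ug y (ct_psubst g t) -> ct_ug y t.
Proof.
  induction t; intros g y G H; simpl in *; auto.
  - destruct H as [A B]. split; auto. eapply IHt; [|exact B]. apply env_ok_upd; auto.
  - destruct (G x) as [E|E].
    + rewrite E in H; simpl in H; auto.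
    + apply ct_ug_In_fv in H. destruct E as [E _]. rewrite E in H. contradiction.
Qed.

Lemma ct_psubst_ok (t : ctb) : forall g, env_ok g -> ct_ok t -> ct_ok (ct_psubst g t).
Proof.
  induction t using ct_nested_ind; intros g G Ht.
  1-5: simpl in *; intuition.
  1-2: rewrite Forall_forall in H; simpl ct_psubst;
       first [rewrite ct_ok_CExt in * | rewrite ct_ok_CInt in *];
       apply ct_ok_map_branches; auto.
  - simpl in *. destruct Ht as [A B].
    assert (G' : env_ok (env_upd g x (CVar x))) by (apply env_ok_upd; auto).
    split; auto. intros C. apply A. eapply ct_psubst_ug; eauto.
  - simpl. destruct (G x) as [E|E]; [rewrite E; simpl; auto|apply E].
Qed.

Lemma ct_psubst_closing (t : ctb) g : env_ok g -> (forall y, In y (ct_fv t) -> SC (g y)) ->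
  ct_ok t -> SC (ct_psubst g t).
Proof.
  intros G C O. split; [|apply ct_psubst_ok; auto].
  apply nil_iff_no_In. intros z Hz.
  apply ct_psubst_fv in Hz as [y [A B]]. destruct (C y A) as [D _]. rewrite D in B; auto.
Qed.

Lemma dual_env_ext (t : ctb) : forall g g', (forall y, In y (ct_fv t) -> g y = g' y) ->
  dual_env g t = dual_env g' t.
Proof.
  induction t using ct_nested_ind; intros g g' E; simpl in *; auto.
  1-2: f_equal; auto.
  1-2: f_equal; [apply ct_psubst_ext|apply IHt2]; intros; apply E; apply in_app_iff; auto.
  1-2: f_equal; apply map_ext_in; intros [l s] Hp; rewrite Forall_forall in H; simpl;
       f_equal; apply (H _ Hp); intros y Hy; apply E; eapply In_fv_branch; eauto.
  - f_equal. apply IHt. intros y Hy. unfold env_upd. destruct (Nat.eqb_spec x y); auto.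
    + f_equal. apply ct_psubst_ext. intros z Hz. unfold env_upd. destruct (Nat.eqb_spec x z); auto.
      apply E, In_remove_iff; auto.
    + apply E. apply In_remove_iff; auto.
Qed.

Lemma dual_env_ug (t : ctb) : forall g y, ct_ug y (dual_env g t) <-> ct_ug y t.
Proof. induction t; intros g y; simpl; try tauto. rewrite IHt; tauto. Qed.

Lemma ct_subst_not_In_fv x v (t : ctb) : ~ In x (ct_fv t) -> ct_subst x v t = t.
Proof.
  induction t using ct_nested_ind; intros Hn; simpl in *; auto.
  1-2: f_equal; auto.
  1-2: rewrite in_app_iff in Hn; f_equal; auto.
  1-2: f_equal; rewrite <- (map_id bs) at 2; apply map_ext_in; intros [l s] Hp;
       rewrite Forall_forall in H; simpl; f_equal; apply (H _ Hp); intros C; apply Hn;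
       eapply In_fv_branch; eauto.
  - destruct (Nat.eqb_spec x x0); auto. f_equal. apply IHt. intros C; apply Hn.
    apply In_remove_iff; auto.
  - destruct (Nat.eqb_spec x x0); auto. subst. exfalso; auto.
Qed.

Definition env_avoids x (g : tvar -> ctb) := forall y, y <> x -> ~ In x (ct_fv (g y)).

Lemma env_avoids_id x : env_avoids x env_id.
Proof. intros y Hy C. simpl in C. destruct C; auto. Qed.

Lemma ct_psubst_upd_not_In_fv x u g (c : ctb) : ct_fv u = [] -> env_avoids x g ->
  ~ In x (ct_fv (ct_psubst (env_upd g x u) c)).
Proof.
  intros Hu I C. apply ct_psubst_fv in C as [y [A B]]. unfold env_upd in B.
  destruct (Nat.eqb_spec x y).
  - rewrite Hu in B; auto.
  - apply (I y); auto.
Qed.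

Lemma dual_env_subst (t : ctb) : forall g x u, ct_fv u = [] -> env_avoids x g ->
  dual_env g (ct_subst x u t) = ct_subst x (dual u) (dual_env (env_upd g x u) t).
Proof.
  induction t using ct_nested_ind; intros g y u Hu I; simpl.
  1: reflexivity.
  1-2: f_equal; auto.
  1-2: f_equal; auto; rewrite ct_psubst_subst by auto;
       symmetry; apply ct_subst_not_In_fv, ct_psubst_upd_not_In_fv; auto.
  1-2: f_equal; rewrite !map_map; apply map_ext_in; intros [l s] Hp;
       rewrite Forall_forall in H; simpl; f_equal; apply (H _ Hp); auto.
  - destruct (Nat.eqb_spec y x).
    + subst. simpl. f_equal. apply dual_env_ext. intros z _. unfold env_upd.
      destruct (Nat.eqb x z); auto. f_equal. apply ct_psubst_ext. intros w _.
      destruct (Nat.eqb x w); auto.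
    + simpl. f_equal. rewrite IHt; auto.
      * assert (P : ct_psubst (env_upd g x (CVar x)) (ct_subst y u t)
                    = ct_psubst (env_upd (env_upd g y u) x (CVar x)) t).
        { rewrite ct_psubst_subst by auto. apply ct_psubst_ext. intros w _. unfold env_upd.
          destruct (Nat.eqb_spec y w); destruct (Nat.eqb_spec x w); subst; congruence. }
        rewrite P. f_equal. apply dual_env_ext. intros z _. unfold env_upd.
        destruct (Nat.eqb_spec y z); destruct (Nat.eqb_spec x z); subst; congruence.
      * intros w Hw. unfold env_upd at 1. destruct (Nat.eqb_spec x w); [|apply I; auto].
        intros C. simpl in C. apply In_remove_iff in C as [C _].
        apply ct_psubst_fv in C as [v [A B]].
        apply ct_fv_subst in A as [[A1 A2]|A1]; [|rewrite Hu in A1; auto].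
        unfold env_upd in B. destruct (Nat.eqb_spec x v).
        -- simpl in B. destruct B as [B|[]]; congruence.
        -- apply (I v); auto.
  - unfold env_upd. destruct (Nat.eqb_spec y x); simpl.
    + subst. apply dual_env_ext. intros z Hz; rewrite Hu in Hz; contradiction.
    + reflexivity.
Qed.

Lemma dual_mu x (s : ctb) : dual (CMu x s) = CMu x (dual_env (env_upd env_id x (CMu x s)) s).
Proof.
  unfold dual. change (dual_env env_id (CMu x s))
    with (CMu x (dual_env (env_upd env_id x (ct_psubst env_id (CMu x s))) s)).
  rewrite ct_psubst_id. reflexivity.
Qed.

Lemma dual_unfold x (s : ctb) : SC (CMu x s) ->
  ct_subst x (dual (CMu x s)) (dual_env (env_upd env_id x (CMu x s)) s)
  = dual (ct_subst x (CMu x s) s).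
Proof. intros [Hf _]. unfold dual at 2. rewrite dual_env_subst; auto. apply env_avoids_id. Qed.

Lemma dual_env_ok (t : ctb) : forall g, env_ok g -> (forall y, In y (ct_fv t) -> SC (g y)) ->
  ct_ok t -> ct_ok (dual_env g t) /\ (forall z, In z (ct_fv (dual_env g t)) -> In z (ct_fv t)).
Proof.
  induction t using ct_nested_ind; intros g G C O.
  1: simpl; auto.
  1-2: simpl in *; apply IHt; auto.
  1-2: simpl in *; destruct O as [O1 O2];
       destruct (@ct_psubst_closing t1 g) as [M1 M2]; auto;
       [intros; apply C, in_app_iff; auto|];
       destruct (IHt2 g) as [A B]; auto; [intros; apply C, in_app_iff; auto|];
       split; auto; intros z Hz; rewrite M1 in Hz; simpl in Hz; apply in_app_iff; auto.
  1-2: simpl dual_env; simpl ct_fv;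
       first [rewrite ct_ok_CExt in O; rewrite ct_ok_CInt
             |rewrite ct_ok_CInt in O; rewrite ct_ok_CExt]; destruct O as [A [B D]]; rewrite Forall_forall in H, D;
       split; [split; [apply map_neq_nil; auto|split]|];
       [rewrite map_fst_map_snd; auto| |];
       [apply Forall_forall; intros p Hp; apply in_map_iff in Hp as [q [<- Hq]]; simpl;
        apply (H q Hq g G); auto; intros y Hy; apply C; simpl; apply in_flat_map; eauto
       |intros z Hz; apply in_flat_map in Hz as [p [Hp Hz]];
        apply in_map_iff in Hp as [q [<- Hq]]; simpl in Hz; apply in_flat_map;
        exists q; split; auto; apply (H q Hq g G); auto;
        intros y Hy; apply C; simpl; apply in_flat_map; eauto].
  - simpl in O. destruct O as [O1 O2].
    assert (M : SC (ct_psubst g (CMu x t))) by (apply ct_psubst_closing; simpl; auto).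
    assert (G' : env_ok (env_upd g x (ct_psubst g (CMu x t)))) by (apply env_ok_upd; auto).
    assert (C' : forall y, In y (ct_fv t) -> SC (env_upd g x (ct_psubst g (CMu x t)) y)).
    { intros y Hy. unfold env_upd. destruct (Nat.eqb_spec x y); auto. apply C. simpl.
      apply In_remove_iff; auto. }
    destruct (IHt _ G' C' O2) as [A B].
    change (dual_env g (CMu x t)) with (CMu x (dual_env (env_upd g x (ct_psubst g (CMu x t))) t)).
    simpl. split.
    + split; auto. rewrite dual_env_ug. auto.
    + intros z Hz. apply In_remove_iff in Hz as [Hz Hne]. apply In_remove_iff; auto.
  - simpl. split; auto.
Qed.

Lemma SC_dual (t : ctb) : SC t -> SC (dual t).
Proof.
  intros [Hf Ho]. destruct (@dual_env_ok t env_id env_ok_id) as [A B]; auto.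
  - intros y Hy; rewrite Hf in Hy; contradiction.
  - split; auto. apply nil_iff_no_In. intros z Hz. apply B in Hz. rewrite Hf in Hz; auto.
Qed.

End Duality.

Section Transitions.
Variable BT : Type.
Notation ctb := (ct BT).

Definition NoTau (s : ctb) := forall s', ~ cstep s ATau s'.

Definition only_step (s : ctb) a s' :=
  cstep s a s' /\ forall a' s'', cstep s a' s'' -> a' = a /\ s'' = s'.

Lemma cstep_C1 a (s : ctb) : ~ cstep C1 a s.
Proof. intros H; inversion H. Qed.

Lemma cstep_CVar y a (s : ctb) : ~ cstep (CVar y) a s.
Proof. intros H; inversion H. Qed.

Lemma cstep_CMu x b a (s : ctb) : cstep (CMu x b) a s -> a = ATau /\ s = ct_subst x (CMu x b) b.
Proof. intros H; inversion H; auto. Qed.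

Lemma cstep_CExt bs a (s : ctb) : cstep (CExt bs) a s -> exists l, a = AInL l /\ In (l, s) bs.
Proof. intros H; inversion H; subst; eauto. Qed.

Lemma cstep_CInt bs a (s : ctb) : cstep (CInt bs) a s ->
  (exists l, a = AOutL l /\ bs = [(l, s)]) \/
  (a = ATau /\ 1 < length bs /\ exists l x, In (l, x) bs /\ s = CInt [(l, x)]).
Proof. intros H; inversion H; subst; eauto 10. Qed.

Lemma cstep_tau (s : ctb) s' : cstep s ATau s' -> (exists x b, s = CMu x b) \/
  (exists bs l x, s = CInt bs /\ 1 < length bs /\ In (l, x) bs /\ s' = CInt [(l, x)]).
Proof. intros H; inversion H; subst; eauto 10. Qed.

Lemma cstep_AInB (r : ctb) t r' : cstep r (AInB t) r' -> r = CInB t r'.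
Proof. intros H; inversion H; auto. Qed.
Lemma cstep_AOutB (r : ctb) t r' : cstep r (AOutB t) r' -> r = COutB t r'.
Proof. intros H; inversion H; auto. Qed.
Lemma cstep_AInC (r : ctb) c r' : cstep r (AInC c) r' -> r = CInC c r'.
Proof. intros H; inversion H; auto. Qed.
Lemma cstep_AOutC (r : ctb) c r' : cstep r (AOutC c) r' -> r = COutC c r'.
Proof. intros H; inversion H; auto. Qed.
Lemma cstep_AInL (r : ctb) l r' : cstep r (AInL l) r' -> exists bs, r = CExt bs /\ In (l, r') bs.
Proof. intros H; inversion H; eauto. Qed.
Lemma cstep_AOutL (r : ctb) l r' : cstep r (AOutL l) r' -> r = CInt [(l, r')].
Proof. intros H; inversion H; auto. Qed.

Lemma only_step_CInB t (x : ctb) : only_step (CInB t x) (AInB t) x.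
Proof. split; [constructor|intros a y H; inversion H; auto]. Qed.
Lemma only_step_COutB t (x : ctb) : only_step (COutB t x) (AOutB t) x.
Proof. split; [constructor|intros a y H; inversion H; auto]. Qed.
Lemma only_step_CInC (c x : ctb) : only_step (CInC c x) (AInC c) x.
Proof. split; [constructor|intros a y H; inversion H; auto]. Qed.
Lemma only_step_COutC (c x : ctb) : only_step (COutC c x) (AOutC c) x.
Proof. split; [constructor|intros a y H; inversion H; auto]. Qed.
Lemma only_step_CInt_single l (x : ctb) : only_step (CInt [(l, x)]) (AOutL l) x.
Proof.
  split; [constructor|]. intros a y H.
  apply cstep_CInt in H as [[l0 [-> E]]|[_ [L _]]]; [injection E as -> ->; auto|simpl in L; lia].
Qed.

Lemma only_step_NoTau (s : ctb) a s' : only_step s a s' -> a <> ATau -> NoTau s.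
Proof. intros [_ D] Ha s'' T. apply Ha. symmetry. apply (D _ _ T). Qed.

Lemma NoTau_C1 : NoTau (@C1 BT).
Proof. intros z Z. inversion Z. Qed.

Lemma NoTau_CExt (bs : list (label * ctb)) : NoTau (CExt bs).
Proof. intros z Z. apply cstep_CExt in Z as [? [E _]]; discriminate. Qed.

Lemma NoTau_CInt_single l (x : ctb) : NoTau (CInt [(l, x)]).
Proof. eapply only_step_NoTau; [apply only_step_CInt_single|discriminate]. Qed.

Lemma In_single_length (A : Type) (p : A) bs : In p bs -> length bs <= 1 -> bs = [p].
Proof.
  destruct bs as [|a [|b bs]]; simpl; intros H L; try contradiction.
  - destruct H as [->|[]]; auto.
  - exfalso. lia.
Qed.

Lemma SC_CExt_branch bs l (x : ctb) : SC (CExt bs) -> In (l, x) bs -> SC x.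
Proof.
  intros [F O] Hin. split.
  - apply nil_iff_no_In. intros z Hz. pose proof (@In_fv_branch _ bs l x z Hin Hz) as H.
    simpl in F. rewrite F in H. exact H.
  - apply ct_ok_CExt in O as [_ [_ O]]. rewrite Forall_forall in O. apply (O _ Hin).
Qed.

Lemma SC_CInt_branch bs l (x : ctb) : SC (CInt bs) -> In (l, x) bs -> SC x.
Proof.
  intros [F O] Hin. split.
  - apply nil_iff_no_In. intros z Hz. pose proof (@In_fv_branch _ bs l x z Hin Hz) as H.
    simpl in F. rewrite F in H. exact H.
  - apply ct_ok_CInt in O as [_ [_ O]]. rewrite Forall_forall in O. apply (O _ Hin).
Qed.

Lemma SC_CInt_single l (x : ctb) : SC x -> SC (CInt [(l, x)]).
Proof.
  intros [F O]. split; simpl. rewrite F; auto. split; [congruence|split; auto].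
  constructor; auto. constructor.
Qed.

Lemma SC_CExt_single l (x : ctb) : SC x -> SC (CExt [(l, x)]).
Proof.
  intros [F O]. split; simpl. rewrite F; auto. split; [congruence|split; auto].
  constructor; auto. constructor.
Qed.

Lemma SC_CExt_NoDup (bs : list (label * ctb)) : SC (CExt bs) -> NoDup (map fst bs).
Proof. intros [_ O]. apply ct_ok_CExt in O; tauto. Qed.
Lemma SC_CInt_NoDup (bs : list (label * ctb)) : SC (CInt bs) -> NoDup (map fst bs).
Proof. intros [_ O]. apply ct_ok_CInt in O; tauto. Qed.
Lemma SC_CExt_neq_nil (bs : list (label * ctb)) : SC (CExt bs) -> bs <> [].
Proof. intros [_ O]. apply ct_ok_CExt in O; tauto. Qed.
Lemma SC_CInt_neq_nil (bs : list (label * ctb)) : SC (CInt bs) -> bs <> [].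
Proof. intros [_ O]. apply ct_ok_CInt in O; tauto. Qed.

Lemma SC_CInC (c r : ctb) : SC (CInC c r) <-> SC c /\ SC r.
Proof.
  unfold SC; simpl. split.
  - intros [F O]. apply app_eq_nil in F. tauto.
  - intros [[F1 O1] [F2 O2]]. rewrite F1, F2. tauto.
Qed.
Lemma SC_COutC (c r : ctb) : SC (COutC c r) <-> SC c /\ SC r.
Proof.
  unfold SC; simpl. split.
  - intros [F O]. apply app_eq_nil in F. tauto.
  - intros [[F1 O1] [F2 O2]]. rewrite F1, F2. tauto.
Qed.

Lemma cstep_SC (s : ctb) a s' : SC s -> cstep s a s' -> SC s'.
Proof.
  intros Hs H. destruct H.
  - apply Hs.
  - apply Hs.
  - apply (SC_CInC c s); auto.
  - apply (SC_COutC c s); auto.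
  - eapply SC_CInt_branch; eauto. left; reflexivity.
  - apply SC_CInt_single. eapply SC_CInt_branch; eauto.
  - eapply SC_CExt_branch; eauto.
  - apply SC_unfold; auto.
Qed.

End Transitions.

Section Compliance.
Variable BT : Type.
Notation ctb := (ct BT).
Variable leb : BT -> BT -> Prop.
Variable B : ctb -> ctb -> Prop.
Notation comp := (compliant leb B).
Notation ps := (pstep leb B).

Lemma bowtie_not_tau_l a b : bowtie leb B a b -> a <> ATau.
Proof. intros H ->. destruct b; exact H. Qed.

Lemma bowtie_not_tau_r a b : bowtie leb B a b -> b <> ATau.
Proof. intros H ->. destruct a; exact H. Qed.

Lemma compliant_inv (r s : ctb) : comp r s -> SC r /\ SC s /\
  ((~ exists r' s', ps r s r' s') -> ticks r /\ ticks s) /\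
  (forall r' s', ps r s r' s' -> comp r' s').
Proof.
  intros [R [HR Hr]]. destruct (HR _ _ Hr) as [A [C [D E]]].
  split; [auto|split; [auto|split; [auto|]]]. intros r' s' P. exists R; split; auto.
Qed.

Lemma compliant_step (r s : ctb) r' s' : comp r s -> ps r s r' s' -> comp r' s'.
Proof. intros C P. exact (proj2 (proj2 (proj2 (compliant_inv C))) _ _ P). Qed.

Lemma compliant_coind (R : ctb -> ctb -> Prop) :
  (forall r s, R r s -> SC r /\ SC s /\
    ((~ exists r' s', ps r s r' s') -> ticks r /\ ticks s) /\
    (forall r' s', ps r s r' s' -> R r' s' \/ comp r' s')) ->
  forall r s, R r s -> comp r s.
Proof.
  intros H r s Hrs. exists (fun x y => R x y \/ comp x y). split; auto.
  intros x y [Hxy|Hxy].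
  - destruct (H _ _ Hxy) as [A [C [D E]]]. auto.
  - destruct (compliant_inv Hxy) as [A [C [D E]]]. split; [auto|split; [auto|split; [auto|]]].
    intros; right; auto.
Qed.

Lemma compliant_intro (r s : ctb) : SC r -> SC s -> (exists r' s', ps r s r' s') ->
  (forall r' s', ps r s r' s' -> comp r' s') -> comp r s.
Proof.
  intros A C D E. apply compliant_coind with (R := fun x y => x = r /\ y = s); auto.
  intros x y [-> ->]. split; [auto|split; [auto|split]].
  - intros N; exfalso; auto.
  - intros; right; auto.
Qed.

Lemma compliant_C1 : comp C1 C1.
Proof.
  apply compliant_coind with (R := fun x y => x = C1 /\ y = C1); auto.
  intros x y [-> ->]. split; [split; simpl; auto|split; [split; simpl; auto|split]].
  - intros; split; reflexivity.
  - intros r' s' P. inversion P; subst; exfalso; eapply cstep_C1; eauto.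
Qed.

Lemma compliant_tau_r (r s s' : ctb) : comp r s -> cstep s ATau s' -> comp r s'.
Proof. intros H T. eapply compliant_step; eauto. apply ps_r; auto. Qed.

Lemma compliant_tau_l (r s r' : ctb) : comp r s -> cstep r ATau r' -> comp r' s.
Proof. intros H T. eapply compliant_step; eauto. apply ps_l; auto. Qed.

Lemma compliant_unfolds_r (r s s' : ctb) : comp r s -> unfolds_to s s' -> comp r s'.
Proof.
  intros H M. induction M; auto. apply IHM. eapply compliant_tau_r; eauto. constructor.
Qed.

Lemma compliant_unfolds_back_r (r s s' : ctb) : comp r s' -> unfolds_to s s' -> SC s -> comp r s.
Proof.
  intros H M S.
  apply compliant_coind
    with (R := fun x y => SC x /\ SC y /\ exists z, unfolds_to y z /\ comp x z).
  2: { split; [apply (compliant_inv H)|split; auto]. eauto. }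
  clear. intros x y [Sx [Sy [z [M C]]]]. destruct M as [y|v b z M].
  - destruct (compliant_inv C) as [A [D [E F]]]. split; [auto|split; [auto|split; [auto|]]].
    intros; right; auto.
  - split; [auto|split; [auto|split]].
    + intros N; exfalso; apply N. exists x, (ct_subst v (CMu v b) b). apply ps_r. constructor.
    + intros r' s' P. inversion P as [? ? ? T|? ? ? T|? ? ? ? a1 a2 T1 T2 Hb]; subst.
      * left. split; [apply (cstep_SC Sx T)|]. split; auto.
        exists z; split; [constructor; auto|eapply compliant_tau_l; eauto].
      * apply cstep_CMu in T as [_ ->]. left. split; auto. split; [apply SC_unfold; auto|]. eauto.
      * apply cstep_CMu in T2 as [-> _]. exfalso; eapply bowtie_not_tau_r; eauto.
Qed.

Lemma compliant_commit (r : ctb) bs l x :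
  comp r (CInt bs) -> In (l, x) bs -> comp r (CInt [(l, x)]).
Proof.
  intros H Hin. destruct (Nat.le_gt_cases (length bs) 1) as [L|L].
  - rewrite <- (In_single_length _ _ Hin L). auto.
  - eapply compliant_tau_r; eauto. constructor; auto.
Qed.

Lemma compliant_stuck (r s : ctb) : comp r s -> NoTau r -> NoTau s ->
  (forall a1 a2 r' s', cstep r a1 r' -> cstep s a2 s' -> ~ bowtie leb B a1 a2) ->
  r = C1 /\ s = C1.
Proof.
  intros H Nr Ns Nb. apply (compliant_inv H).
  intros [r' [s' P]]. inversion P; subst.
  - eapply Nr; eauto.
  - eapply Ns; eauto.
  - eapply Nb; eauto.
Qed.

Lemma compliant_sync (r s : ctb) : comp r s -> NoTau r -> NoTau s -> ~ (r = C1 /\ s = C1) ->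
  exists a1 a2 r' s', cstep r a1 r' /\ cstep s a2 s' /\ bowtie leb B a1 a2 /\ comp r' s'.
Proof.
  intros H Nr Ns N. apply NNPP. intros Hn. apply N. apply compliant_stuck; auto.
  intros a1 a2 r' s' H1 H2 Hb. apply Hn. exists a1, a2, r', s'.
  split; [auto|split; [auto|split; auto]].
  eapply compliant_step; eauto. eapply ps_sync; eauto.
Qed.

Lemma compliant_only_steps (r s : ctb) a b r' s' : comp r s ->
  only_step r a r' -> a <> ATau -> only_step s b s' -> b <> ATau -> comp r' s'.
Proof.
  intros C Hr Ha Hs Hb.
  destruct (compliant_sync C (only_step_NoTau Hr Ha) (only_step_NoTau Hs Hb))
    as [a1 [a2 [r1 [s1 [T1 [T2 [_ C']]]]]]].
  - intros [-> _]. eapply cstep_C1, (proj1 Hr).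
  - destruct (proj2 Hr _ _ T1) as [_ ->]. destruct (proj2 Hs _ _ T2) as [_ ->]. exact C'.
Qed.

Lemma compliant_only_step_intro (r s : ctb) a b r' s' :
  SC r -> SC s -> only_step r a r' -> NoTau s -> cstep s b s' -> bowtie leb B a b ->
  (forall b' s'', cstep s b' s'' -> bowtie leb B a b' -> s'' = s') ->
  comp r' s' -> comp r s.
Proof.
  intros Sr Ss [Tr Dr] Ns Ts Hb Ds C. apply compliant_intro; auto.
  - exists r', s'. eapply ps_sync; eauto.
  - intros r1 s1 P. inversion P as [? ? ? T|? ? ? T|? ? ? ? a1 a2 T1 T2 Hb']; subst.
    + destruct (Dr _ _ T) as [E _]. exfalso; eapply bowtie_not_tau_l; [exact Hb|congruence].
    + exfalso; eapply Ns; eauto.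
    + destruct (Dr _ _ T1) as [-> ->]. rewrite (Ds _ _ T2 Hb'). exact C.
Qed.

End Compliance.

Section DualCompliance.
Variable BT : Type.
Notation ctb := (ct BT).
Variable leb : BT -> BT -> Prop.
Variable B : ctb -> ctb -> Prop.
Hypothesis leb_refl : forall t, leb t t.
Hypothesis B_refl : forall c, SC c -> B c c.
Notation comp := (compliant leb B).
Notation ps := (pstep leb B).

(* Once a partner commits an internal choice, the heads of [a] and of the contract [s] that
   [dual a] is run against differ by that commitment. *)
Definition heads_agree (h1 h2 : ctb) : Prop :=
  h1 = h2 \/
  (exists bs l x, h1 = CInt bs /\ h2 = CInt [(l, x)] /\ In (l, x) bs) \/
  (exists bs l x, h1 = CExt [(l, x)] /\ h2 = CExt bs /\ In (l, x) bs).

Definition dual_pair (r s : ctb) : Prop :=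
  exists a, r = dual a /\ SC a /\ SC s /\ heads_agree (ct_unfold a) (ct_unfold s).

Lemma not_mu_dual (a : ctb) : not_mu a -> not_mu (dual a).
Proof. destruct a; intros N y c E; unfold dual in E; simpl in E; try discriminate. eapply N; eauto. Qed.

Lemma dual_CExt_single l (x : ctb) : dual (CExt [(l, x)]) = CInt [(l, dual x)].
Proof. reflexivity. Qed.

Lemma dual_self_progress (a : ctb) : SC a -> not_mu a -> a <> C1 ->
  exists r' s', ps (dual a) a r' s'.
Proof.
  intros Sa Na Ne.
  destruct a as [|t x|t x|c x|c x|bs|bs|x b|y]; unfold dual; simpl.
  - congruence.
  - do 2 eexists. eapply ps_sync; [apply cs_outb|apply cs_inb|simpl; auto].
  - do 2 eexists. eapply ps_sync; [apply cs_inb|apply cs_outb|simpl; auto].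
  - rewrite ct_psubst_id. do 2 eexists. eapply ps_sync; [apply cs_outc|apply cs_inc|].
    simpl; apply B_refl, (SC_CInC c x); auto.
  - rewrite ct_psubst_id. do 2 eexists. eapply ps_sync; [apply cs_inc|apply cs_outc|].
    simpl; apply B_refl, (SC_COutC c x); auto.
  - destruct bs as [|[l x] [|q bs0]]; [exfalso; apply (SC_CExt_neq_nil Sa); auto| |].
    + do 2 eexists. eapply ps_sync; [apply cs_outl|apply cs_ext; left; reflexivity|simpl; auto].
    + do 2 eexists. apply ps_l. apply cs_int with (l := l) (s := dual x).
      * simpl; lia.
      * left; reflexivity.
  - destruct bs as [|[l x] [|q bs0]]; [exfalso; apply (SC_CInt_neq_nil Sa); auto| |].
    + do 2 eexists. eapply ps_sync; [apply cs_ext; left; reflexivity|apply cs_outl|simpl; auto].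
    + do 2 eexists. apply ps_r. apply cs_int with (l := l) (s := x); [simpl; lia|left; reflexivity].
  - exfalso; eapply Na; eauto.
  - exfalso; eapply SC_not_var; eauto.
Qed.

Lemma dual_pair_progress (r s : ctb) : dual_pair r s ->
  (exists r' s', ps r s r' s') \/ (r = C1 /\ s = C1).
Proof.
  intros [a [-> [Sa [Ss M]]]].
  destruct (not_mu_or_mu a) as [[x [b ->]]|Na].
  { left. do 2 eexists. apply ps_l. rewrite dual_mu. constructor. }
  destruct (not_mu_or_mu s) as [[y [c ->]]|Ns].
  { left. do 2 eexists. apply ps_r. constructor. }
  rewrite (ct_unfold_not_mu Na), (ct_unfold_not_mu Ns) in M.
  destruct M as [<-|[[bs [l [x [-> [-> Hin]]]]]|[bs [l [x [-> [-> Hin]]]]]]].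
  - destruct (classic (a = C1)) as [->|Ne]; [right; auto|].
    left. apply dual_self_progress; auto.
  - left. do 2 eexists. eapply ps_sync; unfold dual; simpl.
    + apply cs_ext. apply in_map_iff. exists (l, x); split; [reflexivity|exact Hin].
    + apply cs_outl.
    + simpl; auto.
  - left. do 2 eexists. eapply ps_sync; [apply cs_outl|apply cs_ext; exact Hin|simpl; auto].
Qed.

Lemma dual_pair_tau_l (a s r' : ctb) : SC a -> SC s ->
  heads_agree (ct_unfold a) (ct_unfold s) -> cstep (dual a) ATau r' -> dual_pair r' s.
Proof.
  intros Sa Ss M T.
  destruct (not_mu_or_mu a) as [[x [b ->]]|Na].
  - rewrite dual_mu in T. apply cstep_CMu in T as [_ ->]. exists (ct_subst x (CMu x b) b).
    split; [rewrite <- dual_mu; apply dual_unfold; auto|].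
    split; [apply SC_unfold; auto|split; auto]. rewrite <- ct_unfold_mu; auto. apply Sa.
  - rewrite (ct_unfold_not_mu Na) in M.
    destruct (cstep_tau T) as [[x [b E]]|[bs' [l [x' [E [L [Hin ->]]]]]]].
    + exfalso. eapply (not_mu_dual Na); eauto.
    + destruct a as [| | | | |bs| | |]; unfold dual in E; simpl in E; try discriminate.
      injection E as E. subst bs'. apply in_map_iff in Hin as [[l0 x0] [Eq Hin]].
      simpl in Eq. injection Eq as E1 E2. subst. exists (CExt [(l, x0)]).
      split; [reflexivity|].
      split; [apply SC_CExt_single; eapply SC_CExt_branch; eauto|split; auto].
      rewrite ct_unfold_not_mu by (intros ? ? ?; discriminate). right; right.
      destruct M as [E|[[bs1 [l1 [x1 [E1 [E2 _]]]]]|[bs1 [l1 [x1 [E1 [E2 _]]]]]]].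
      * exists bs, l, x0. split; auto.
      * discriminate.
      * injection E1 as ->. simpl in L. lia.
Qed.

Lemma dual_pair_tau_r (a s s' : ctb) : SC a -> SC s ->
  heads_agree (ct_unfold a) (ct_unfold s) -> cstep s ATau s' -> dual_pair (dual a) s'.
Proof.
  intros Sa Ss M T. exists a. split; [reflexivity|split; [exact Sa|]].
  destruct (not_mu_or_mu s) as [[x [b ->]]|Ns].
  - apply cstep_CMu in T as [_ ->]. split; [apply SC_unfold; auto|].
    rewrite <- ct_unfold_mu; auto. apply Ss.
  - rewrite (ct_unfold_not_mu Ns) in M.
    destruct (cstep_tau T) as [[x [b E]]|[bs [l [x [-> [L [Hin ->]]]]]]];
      [exfalso; eapply Ns; eauto|].
    split; [eapply cstep_SC; eauto|].
    rewrite (ct_unfold_not_mu (t := CInt [(l, x)])) by (intros ? ? ?; discriminate).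
    destruct M as [E|[[bs1 [l1 [x1 [E1 [E2 _]]]]]|[bs1 [l1 [x1 [E1 [E2 _]]]]]]].
    + right; left. exists bs, l, x. auto.
    + injection E2 as ->. simpl in L. lia.
    + discriminate.
Qed.

Lemma dual_pair_sync_same (a : ctb) a1 a2 r' s' : SC a -> not_mu a ->
  cstep (dual a) a1 r' -> cstep a a2 s' -> bowtie leb B a1 a2 -> dual_pair r' s'.
Proof.
  intros Sa Na T1 T2 Hb.
  assert (Keep : forall x, SC x -> dual_pair (dual x) x)
    by (intros x Sx; exists x; split; [reflexivity|split; [auto|split; [auto|left; auto]]]).
  destruct a as [|t x|t x|c x|c x|bs|bs|x b|y]; unfold dual in T1; simpl in T1.
  1: exfalso; eapply cstep_C1; eauto.
  1-4: inversion T1; inversion T2; subst; apply Keep;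
       first [exact Sa | exact (proj2 (proj1 (SC_CInC _ _) Sa))
             | exact (proj2 (proj1 (SC_COutC _ _) Sa))].
  - apply cstep_CInt in T1 as [[l [-> E]]|[-> _]]; [|destruct a2; contradiction].
    destruct bs as [|[l0 x0] [|? ?]]; try discriminate. injection E as -> <-.
    apply cstep_CExt in T2 as [l1 [-> [E|[]]]]. injection E as -> ->.
    apply Keep. eapply SC_CExt_branch; [exact Sa|left; reflexivity].
  - apply cstep_CInt in T2 as [[l [-> ->]]|[-> _]]; [|destruct a1; contradiction].
    apply cstep_CExt in T1 as [l1 [-> [E|[]]]]. injection E as -> <-.
    apply Keep. eapply SC_CInt_branch; [exact Sa|left; reflexivity].
  - exfalso; eapply Na; eauto.
  - exfalso; eapply cstep_CVar; eauto.
Qed.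

Lemma dual_pair_sync (a s : ctb) a1 a2 r' s' : SC a -> SC s ->
  heads_agree (ct_unfold a) (ct_unfold s) -> cstep (dual a) a1 r' -> cstep s a2 s' ->
  bowtie leb B a1 a2 -> dual_pair r' s'.
Proof.
  intros Sa Ss M T1 T2 Hb.
  destruct (not_mu_or_mu a) as [[x [b ->]]|Na].
  { rewrite dual_mu in T1. apply cstep_CMu in T1 as [-> _]. destruct a2; contradiction. }
  destruct (not_mu_or_mu s) as [[x [b ->]]|Ns].
  { apply cstep_CMu in T2 as [-> _]. destruct a1; contradiction. }
  rewrite (ct_unfold_not_mu Na), (ct_unfold_not_mu Ns) in M.
  destruct M as [<-|[[bs [l [x [-> [-> Hin]]]]]|[bs [l [x [-> [-> Hin]]]]]]].
  - eapply dual_pair_sync_same; eauto.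
  - apply cstep_CInt in T2 as [[l0 [-> E]]|[-> _]]; [|destruct a1; contradiction].
    injection E as -> ->.
    unfold dual in T1; simpl in T1. apply cstep_CExt in T1 as [l1 [-> Hin1]].
    simpl in Hb. subst l1. apply in_map_iff in Hin1 as [[l2 x2] [Eq Hin2]]. simpl in Eq.
    injection Eq as E1 E2. subst.
    assert (x2 = s') by (eapply In_NoDup_fst_unique; eauto; apply SC_CInt_NoDup; auto).
    subst x2. exists s'. split; [reflexivity|]. assert (SC s') by (eapply SC_CInt_branch; [exact Sa|exact Hin]).
    split; [auto|split; [auto|left; reflexivity]].
  - rewrite dual_CExt_single in T1.
    apply cstep_CInt in T1 as [[l0 [-> E]]|[-> _]]; [|destruct a2; contradiction].
    injection E as E1 E2. subst. apply cstep_CExt in T2 as [l1 [-> Hin1]]. simpl in Hb. subst.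
    assert (x = s') by (eapply In_NoDup_fst_unique; eauto; apply SC_CExt_NoDup; auto).
    subst x. exists s'. split; [reflexivity|]. assert (SC s') by (eapply SC_CExt_branch; [exact Ss|exact Hin]).
    split; [auto|split; [auto|left; reflexivity]].
Qed.

Lemma compliant_dual (s : ctb) : SC s -> comp (dual s) s.
Proof.
  intros Ss. apply compliant_coind with (R := dual_pair).
  2: { exists s. split; [reflexivity|split; [auto|split; [auto|left; reflexivity]]]. }
  intros r t Hrt. pose proof Hrt as [a [-> [Sa [St M]]]].
  split; [apply SC_dual; auto|split; [auto|split]].
  - intros N. destruct (dual_pair_progress Hrt) as [P|[E1 E2]]; [exfalso; auto|].
    split; auto.
  - intros r' t' P. left. inversion P as [? ? ? T|? ? ? T|? ? ? ? a1 a2 T1 T2 Hb]; subst.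
    + exact (dual_pair_tau_l Sa St M T).
    + exact (dual_pair_tau_r Sa St M T).
    + exact (dual_pair_sync Sa St M T1 T2 Hb).
Qed.

End DualCompliance.

Definition F_ct BT (leb : BT -> BT -> Prop) (Q : ct BT -> ct BT -> Prop) (h1 h2 : ct BT) : Prop :=
  match h1 with
  | C1 => h2 = C1
  | CInB t1 x => exists t2 z, h2 = CInB t2 z /\ Q x z /\ leb t1 t2
  | COutB t1 x => exists t2 z, h2 = COutB t2 z /\ Q x z /\ leb t2 t1
  | CInC c1 x => exists c2 z, h2 = CInC c2 z /\ Q x z /\ Q c1 c2
  | COutC c1 x => exists c2 z, h2 = COutC c2 z /\ Q x z /\ Q c2 c1
  | CExt bs => exists bs', h2 = CExt bs' /\
      forall l x, In (l, x) bs -> exists y, In (l, y) bs' /\ Q x y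
  | CInt bs => exists bs', h2 = CInt bs' /\
      forall l y, In (l, y) bs' -> exists x, In (l, x) bs /\ Q x y
  | _ => False
  end.

Definition prefix_act BT (a : act BT) : Prop :=
  match a with AInB _ | AOutB _ | AInC _ | AOutC _ => True | _ => False end.

Section PrefixActions.
Variable BT : Type.
Notation ctb := (ct BT).
Variable leb : BT -> BT -> Prop.
Variable B : ctb -> ctb -> Prop.

Lemma prefix_act_only_step (s : ctb) a s' : cstep s a s' -> prefix_act a -> only_step s a s'.
Proof.
  intros T P. destruct a; try contradiction.
  - apply cstep_AInB in T as ->. apply only_step_CInB.
  - apply cstep_AOutB in T as ->. apply only_step_COutB.
  - apply cstep_AInC in T as ->. apply only_step_CInC.
  - apply cstep_AOutC in T as ->. apply only_step_COutC.
Qed.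

Lemma prefix_act_not_tau (a : act BT) : prefix_act a -> a <> ATau.
Proof. destruct a; simpl; congruence. Qed.

Lemma bowtie_prefix_act a1 a2 : bowtie leb B a1 a2 -> prefix_act a2 -> prefix_act a1.
Proof. destruct a1, a2; simpl; tauto. Qed.

Lemma bowtie_AInL_r a1 l : bowtie leb B a1 (AInL l) -> a1 = AOutL l.
Proof. destruct a1; simpl; intros H; try contradiction. congruence. Qed.

Lemma bowtie_AOutL_r a1 l : bowtie leb B a1 (AOutL l) -> a1 = AInL l.
Proof. destruct a1; simpl; intros H; try contradiction. congruence. Qed.

Variable Q : ctb -> ctb -> Prop.
Hypothesis leb_trans : forall a b c, leb a b -> leb b c -> leb a c.
Hypothesis B_trans : forall a b c, B a b -> B b c -> B a c.
Hypothesis Q_sub_B : forall a b, Q a b -> B a b.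

Lemma F_ct_prefix_l (h t : ctb) a x : F_ct leb Q h t -> cstep h a x -> prefix_act a ->
  exists a' z, cstep t a' z /\ Q x z /\ forall a1, bowtie leb B a1 a -> bowtie leb B a1 a'.
Proof.
  intros F T P. destruct a; try contradiction.
  - apply cstep_AInB in T as ->. destruct F as [t2 [z [-> [Qxz L]]]].
    exists (AInB t2), z. split; [constructor|split; auto].
    intros a1; destruct a1; simpl; eauto; tauto.
  - apply cstep_AOutB in T as ->. destruct F as [t2 [z [-> [Qxz L]]]].
    exists (AOutB t2), z. split; [constructor|split; auto].
    intros a1; destruct a1; simpl; eauto; tauto.
  - apply cstep_AInC in T as ->. destruct F as [c2 [z [-> [Qxz Qc]]]].
    exists (AInC c2), z. split; [constructor|split; auto].
    intros a1; destruct a1; simpl; eauto; tauto.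
  - apply cstep_AOutC in T as ->. destruct F as [c2 [z [-> [Qxz Qc]]]].
    exists (AOutC c2), z. split; [constructor|split; auto].
    intros a1; destruct a1; simpl; eauto; tauto.
Qed.

Lemma F_ct_prefix_r (h t : ctb) a' z : F_ct leb Q h t -> cstep t a' z -> prefix_act a' ->
  exists a x, cstep h a x /\ prefix_act a /\ Q x z.
Proof.
  intros F T P. destruct a'; try contradiction;
    [apply cstep_AInB in T|apply cstep_AOutB in T|apply cstep_AInC in T|apply cstep_AOutC in T];
    subst t; destruct h; simpl in F; try contradiction;
    repeat match goal with H : exists _, _ |- _ => destruct H | H : _ /\ _ |- _ => destruct H end;
    try discriminate;
    match goal with E : _ = _ |- _ => injection E as <- <- end;
    eexists; eexists; (split; [constructor|split; [exact I|assumption]]).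
Qed.

End PrefixActions.

Lemma F_ct_CExt_r BT leb (Q : ct BT -> ct BT -> Prop) h bs' : F_ct leb Q h (CExt bs') ->
  exists bs, h = CExt bs /\ forall l x, In (l, x) bs -> exists y, In (l, y) bs' /\ Q x y.
Proof.
  destruct h; simpl; intros H; try contradiction;
    repeat match goal with H : exists _, _ |- _ => destruct H | H : _ /\ _ |- _ => destruct H end;
    try discriminate.
  injection H as ->. eauto.
Qed.

Lemma F_ct_CInt_r BT leb (Q : ct BT -> ct BT -> Prop) h bs' : F_ct leb Q h (CInt bs') ->
  exists bs, h = CInt bs /\ forall l y, In (l, y) bs' -> exists x, In (l, x) bs /\ Q x y.
Proof.
  destruct h; simpl; intros H; try contradiction;
    repeat match goal with H : exists _, _ |- _ => destruct H | H : _ /\ _ |- _ => destruct H end;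
    try discriminate.
  injection H as ->. eauto.
Qed.

Section Simulation.
Variable BT : Type.
Notation ctb := (ct BT).
Variable leb : BT -> BT -> Prop.
Variable B : ctb -> ctb -> Prop.
Variable Q : ctb -> ctb -> Prop.
Hypothesis leb_trans : forall a b c, leb a b -> leb b c -> leb a c.
Hypothesis B_trans : forall a b c, B a b -> B b c -> B a c.
Hypothesis Q_sub_B : forall a b, Q a b -> B a b.
Hypothesis Q_post : forall s t, Q s t -> SC s /\ SC t /\ F_ct leb Q (ct_unfold s) (ct_unfold t).
Hypothesis Q_unfold_r : forall s x b, Q s (CMu x b) -> Q s (ct_subst x (CMu x b) b).
Notation comp := (compliant leb B).
Notation ps := (pstep leb B).

(* Committing an internal choice of [t] leaves [Q]; the pair is then matched by the same
   commitment of [s]. *)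
Definition Q_committed (s t : ctb) :=
  Q s t \/ exists l x y, s = CInt [(l, x)] /\ t = CInt [(l, y)] /\ Q x y.

Lemma Q_committed_F_ct s t : SC s -> Q_committed s t -> F_ct leb Q (ct_unfold s) (ct_unfold t).
Proof.
  intros Ss [H|[l [x [y [-> [-> H]]]]]].
  - apply Q_post; auto.
  - rewrite !ct_unfold_not_mu by (intros ? ? ?; discriminate). simpl.
    exists [(l, y)]. split; [reflexivity|].
    intros l0 y0 [E|[]]. injection E as -> ->. exists x. simpl; auto.
Qed.

Lemma simulation_stuck (r h t : ctb) : comp r h -> SC h -> not_mu h -> SC t ->
  F_ct leb Q h t -> NoTau r -> NoTau t ->
  (forall a1 a2 r' t', cstep r a1 r' -> cstep t a2 t' -> ~ bowtie leb B a1 a2) ->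
  r = C1 /\ t = C1.
Proof.
  intros C Sh Nh St F Nr Nt Nb.
  destruct h as [|t1 x|t1 x|c1 x|c1 x|bs|bs|x b|y].
  1: { simpl in F. subst t. split; [|reflexivity].
       apply (compliant_stuck C Nr Nt). intros a1 a2 r' s' _ T2. inversion T2. }
  6: { destruct F as [bs' [-> Hbs]].
       destruct bs' as [|[l y] [|q bs0]]; [exfalso; apply (SC_CInt_neq_nil St); auto| |].
       2: { exfalso. eapply Nt. apply cs_int with (l := l) (s := y); [simpl; lia|left; auto]. }
       destruct (Hbs l y) as [x [Hin _]]; [left; auto|].
       destruct (compliant_sync (compliant_commit _ _ C Hin) Nr (@NoTau_CInt_single _ l x))
         as [a1 [a2 [r' [x' [T1 [T2 [Hb _]]]]]]]; [intros [_ E]; discriminate|].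
       destruct (proj2 (only_step_CInt_single l x) _ _ T2) as [-> _].
       exfalso. eapply Nb; [exact T1|apply cs_outl|].
       rewrite (@bowtie_AOutL_r _ _ _ _ _ Hb). simpl; reflexivity. }
  6: exfalso; eapply Nh; eauto.
  6: exfalso; eapply SC_not_var; eauto.
  all: destruct (compliant_sync C Nr) as [a1 [a [r' [x' [T1 [T2 [Hb _]]]]]]];
       [intros s' T; inversion T|intros [_ E]; discriminate|]; exfalso.
  1-4: destruct (F_ct_prefix_l _ _ _ leb_trans B_trans Q_sub_B _ F T2) as [a' [z [Tt [_ Hb']]]];
       [inversion T2; exact I|]; eapply Nb; eauto.
  apply cstep_CExt in T2 as [l [-> Hin]]. destruct F as [bs' [-> Hbs]].
  destruct (Hbs _ _ Hin) as [y [Hy _]].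
  eapply Nb; [exact T1|apply cs_ext; exact Hy|exact Hb].
Qed.

Lemma simulation_tau_r (r s t t' : ctb) : SC s -> comp r s -> Q_committed s t ->
  cstep t ATau t' -> exists s', SC s' /\ comp r s' /\ Q_committed s' t'.
Proof.
  intros Ss C Qst T. pose proof (Q_committed_F_ct Ss Qst) as F.
  destruct (cstep_tau T) as [[x [b ->]]|[bs' [l [y [-> [L [Hin ->]]]]]]].
  - apply cstep_CMu in T as [_ ->]. exists s. split; [auto|split; [auto|]].
    destruct Qst as [Hq|[? [? [? [_ [E _]]]]]]; [left; apply Q_unfold_r; auto|discriminate].
  - rewrite (@ct_unfold_not_mu _ (CInt bs')) in F by (intros ? ? ?; discriminate).
    apply F_ct_CInt_r in F as [bs [Eh Hbs]]. destruct (Hbs _ _ Hin) as [x [Hx Qxy]].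
    pose proof (SC_ct_unfold Ss) as Sh. rewrite Eh in Sh.
    assert (Ch : comp r (CInt bs))
      by (rewrite <- Eh; eapply compliant_unfolds_r; [exact C|apply ct_unfold_spec, Ss]).
    exists (CInt [(l, x)]). split; [apply SC_CInt_single; eapply SC_CInt_branch; eauto|].
    split; [eapply compliant_commit; eauto|]. right. exists l, x, y. auto.
Qed.

Lemma simulation_sync (r h t : ctb) a1 a2 r' t' : comp r h -> SC h -> SC t ->
  F_ct leb Q h t -> cstep r a1 r' -> cstep t a2 t' -> bowtie leb B a1 a2 ->
  exists s', comp r' s' /\ Q s' t'.
Proof.
  intros C Sh St F T1 T2 Hb.
  destruct a2 as [| | | | |l|l]; [exfalso; eapply bowtie_not_tau_r; eauto| | | | | |].
  5: { apply bowtie_AInL_r in Hb as ->. apply cstep_AInL in T2 as [bs' [-> Hin]].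
       apply cstep_AOutL in T1 as ->. apply F_ct_CExt_r in F as [bs [-> Hbs]].
       destruct (compliant_sync C (@NoTau_CInt_single _ l r') (@NoTau_CExt _ bs))
         as [b1 [b2 [r1 [x [U1 [U2 [Hb' C']]]]]]]; [intros [E _]; discriminate|].
       destruct (proj2 (only_step_CInt_single l r') _ _ U1) as [-> ->].
       apply cstep_CExt in U2 as [l1 [-> Hx]]. simpl in Hb'. subst l1.
       destruct (Hbs _ _ Hx) as [y [Hy Qxy]].
       assert (y = t') by (eapply In_NoDup_fst_unique; eauto; apply SC_CExt_NoDup; auto).
       subst y. eauto. }
  5: { apply bowtie_AOutL_r in Hb as ->. apply cstep_AOutL in T2 as ->.
       apply F_ct_CInt_r in F as [bs [-> Hbs]].
       destruct (Hbs l t') as [x [Hx Qx]]; [left; auto|].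
       exists x. split; auto. eapply compliant_step; [eapply compliant_commit; eauto|].
       eapply ps_sync; [exact T1|apply cs_outl|simpl; auto]. }
  all: destruct (F_ct_prefix_r _ _ _ F T2 I) as [a [x [Th [Pa Qxz]]]];
       exists x; split; [|exact Qxz];
       eapply compliant_only_steps;
       [exact C|apply prefix_act_only_step; [exact T1|eapply bowtie_prefix_act; [exact Hb|exact I]]
       |apply prefix_act_not_tau; eapply bowtie_prefix_act; [exact Hb|exact I]
       |apply prefix_act_only_step; eauto|apply prefix_act_not_tau; auto].
Qed.

Theorem simulation_compliant r s t : Q s t -> comp r s -> comp r t.
Proof.
  intros Hq Hc.
  apply compliant_coind
    with (R := fun r t => exists s, SC r /\ SC s /\ SC t /\ comp r s /\ Q_committed s t).
  2: { destruct (Q_post Hq) as [Ss [St _]]. exists s.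
       split; [apply (compliant_inv Hc)|split; [|split; [|split; [|left]]]]; auto. }
  clear r s t Hq Hc. intros r t [s [Sr [Ss [St [C Qst]]]]].
  pose proof (Q_committed_F_ct Ss Qst) as F.
  destruct (ct_unfold_spec Ss) as [Us Nh].
  assert (Ch : comp r (ct_unfold s)) by (eapply compliant_unfolds_r; eauto).
  split; [auto|split; [auto|split]].
  - intros N.
    assert (Nr : NoTau r) by (intros r' T; apply N; exists r', t; apply ps_l; auto).
    assert (Nt : NoTau t) by (intros t' T; apply N; exists r, t'; apply ps_r; auto).
    destruct (not_mu_or_mu t) as [[x [b ->]]|Nmt]; [exfalso; eapply Nt; constructor|].
    rewrite (ct_unfold_not_mu Nmt) in F.
    apply (simulation_stuck Ch (SC_ct_unfold Ss) Nh St F Nr Nt).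
    intros a1 a2 r' t' T1 T2 Hb. apply N. exists r', t'. eapply ps_sync; eauto.
  - intros r' t' P. left. inversion P as [? ? ? T|? ? ? T|? ? ? ? a1 a2 T1 T2 Hb]; subst.
    + exists s. split; [apply (cstep_SC Sr T)|split; [auto|split; [auto|]]].
      split; [eapply compliant_tau_l; eauto|auto].
    + destruct (simulation_tau_r Ss C Qst T) as [s' [Ss' [C' Q']]].
      exists s'. split; [auto|split; [auto|split; [apply (cstep_SC St T)|auto]]].
    + destruct (not_mu_or_mu t) as [[x [b ->]]|Nmt].
      { apply cstep_CMu in T2 as [-> _]. exfalso; eapply bowtie_not_tau_r; eauto. }
      rewrite (ct_unfold_not_mu Nmt) in F.
      destruct (simulation_sync Ch (SC_ct_unfold Ss) St F T1 T2 Hb) as [s' [C' Q']].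
      destruct (Q_post Q') as [Ss' _].
      exists s'. split; [apply (cstep_SC Sr T1)|split; [auto|split; [apply (cstep_SC St T2)|]]].
      split; [auto|left; auto].
Qed.

End Simulation.

Section SubcontractHeads.
Variable BT : Type.
Notation ctb := (ct BT).
Variable leb : BT -> BT -> Prop.
Variable B : ctb -> ctb -> Prop.
Hypothesis leb_refl : forall t, leb t t.
Hypothesis B_preorder : preorder_on_SC B.
Hypothesis B_post : forall a b, B a b -> subc_B leb B a b.
Notation comp := (compliant leb B).
Notation ps := (pstep leb B).
Notation sub := (subc_B leb B).

Lemma B_refl (c : ctb) : SC c -> B c c.
Proof. apply B_preorder. Qed.

Lemma compliant_dual_B (s : ctb) : SC s -> comp (dual s) s.
Proof. apply compliant_dual; auto. exact B_refl. Qed.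

(* Were [h] an internal choice, committing it would leave [r], which accepts no label, stuck. *)
Lemma NoTau_partner (r h : ctb) : comp r h -> NoTau r -> (forall l r', ~ cstep r (AInL l) r') ->
  not_mu h -> NoTau h.
Proof.
  intros C Nr NI Nm h' T.
  destruct (cstep_tau T) as [[x [b E]]|[bs [l [y [-> [L [Hin ->]]]]]]]; [eapply Nm; eauto|].
  destruct (compliant_stuck (compliant_commit _ _ C Hin) Nr (@NoTau_CInt_single _ l y))
    as [_ E]; [|discriminate].
  intros a1 a2 r' s' T1 T2 Hb. destruct (proj2 (only_step_CInt_single l y) _ _ T2) as [-> ->].
  apply bowtie_AOutL_r in Hb as ->. eapply NI; eauto.
Qed.

Section Probe.
Variables h k x : ctb.
Hypothesis h_sub_k : forall r, SC r -> comp r h -> comp r k.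
Hypothesis SC_k : SC k.
Hypothesis not_mu_k : not_mu k.
Hypothesis SC_x : SC x.

(* The witness [z] is produced by the probe [p (dual x)], which complies with [h]. *)
Lemma subc_probe (p : ctb -> ctb) a :
  (forall r, SC r -> SC (p r)) -> (forall r, only_step (p r) a r) -> a <> ATau ->
  (forall l, a <> AInL l) -> (forall r, SC r -> comp r x -> comp (p r) h) ->
  exists b z, cstep k b z /\ bowtie leb B a b /\ sub x z.
Proof.
  intros Sp Op Na NI Probe.
  assert (C0 : comp (p (dual x)) k)
    by (apply h_sub_k; [apply Sp, SC_dual|apply Probe; [apply SC_dual|apply compliant_dual_B]]; auto).
  assert (Np : forall r, NoTau (p r)) by (intros r; exact (only_step_NoTau (Op r) Na)).
  assert (Nk : NoTau k).
  { eapply NoTau_partner; [exact C0|apply Np| |exact not_mu_k].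
    intros l r' T. apply (NI l). symmetry. apply (proj2 (Op _) _ _ T). }
  destruct (compliant_sync C0 (Np _) Nk) as [a1 [b [r' [z [T1 [T2 [Hb _]]]]]]].
  { intros [E _]. pose proof (proj1 (Op (dual x))) as T0. rewrite E in T0. eapply cstep_C1; eauto. }
  destruct (proj2 (Op _) _ _ T1) as [-> _].
  exists b, z. split; [auto|split; [auto|]].
  split; [auto|split; [apply (cstep_SC SC_k T2)|]].
  intros r Sr C. eapply compliant_step; [apply h_sub_k; [apply Sp|apply Probe]; eauto|].
  eapply ps_sync; [apply (Op r)|exact T2|exact Hb].
Qed.

Lemma subc_prefix a_h (p : ctb -> ctb) a : SC h -> only_step h a_h x -> prefix_act a_h ->
  (forall r, SC r -> SC (p r)) -> (forall r, only_step (p r) a r) -> prefix_act a ->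
  bowtie leb B a a_h -> exists b z, cstep k b z /\ bowtie leb B a b /\ sub x z.
Proof.
  intros Sh Oh Ph Sp Op Pa Hb. apply (@subc_probe p a Sp Op).
  - apply prefix_act_not_tau; auto.
  - intros l E. rewrite E in Pa. exact Pa.
  - intros r Sr C. eapply compliant_only_step_intro.
    + apply Sp; auto.
    + exact Sh.
    + apply Op.
    + apply (only_step_NoTau Oh), prefix_act_not_tau, Ph.
    + apply Oh.
    + exact Hb.
    + intros b' s'' T _. apply (proj2 Oh _ _ T).
    + exact C.
Qed.

End Probe.

Lemma extract_C1 (k : ctb) : (forall r, SC r -> comp r C1 -> comp r k) -> not_mu k -> k = C1.
Proof.
  intros P Nk.
  assert (C0 := P C1 (conj eq_refl I) (compliant_C1 leb B)).
  assert (Nt : NoTau k)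
    by (eapply NoTau_partner; eauto; [apply NoTau_C1|intros l r' Z; inversion Z]).
  destruct (compliant_stuck C0 (@NoTau_C1 BT) Nt) as [_ ->]; auto.
  intros a1 a2 r' s' Z; inversion Z.
Qed.

Lemma extract_CExt bs (k : ctb) : (forall r, SC r -> comp r (CExt bs) -> comp r k) ->
  SC (CExt bs) -> SC k -> not_mu k -> F_ct leb sub (CExt bs) k.
Proof.
  intros P Sh Sk Nk.
  assert (Claim : forall l x, In (l, x) bs ->
            exists bs', k = CExt bs' /\ exists y, In (l, y) bs' /\ sub x y).
  { intros l x Hin.
    destruct (@subc_probe (CExt bs) k x P Sk Nk (SC_CExt_branch _ _ Sh Hin)
                (fun r => CInt [(l, r)]) (AOutL l))
      as [b [z [T [Hb Sxz]]]].
    - intros r Sr; apply SC_CInt_single; auto.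
    - intros r; apply only_step_CInt_single.
    - discriminate.
    - intros l' E; discriminate.
    - intros r Sr C. eapply compliant_only_step_intro.
      + apply SC_CInt_single; auto.
      + exact Sh.
      + apply only_step_CInt_single.
      + apply NoTau_CExt.
      + apply cs_ext; exact Hin.
      + simpl; reflexivity.
      + intros b' s'' T Hb. apply cstep_CExt in T as [l' [-> Hs]]. simpl in Hb; subst l'.
        eapply In_NoDup_fst_unique; [apply SC_CExt_NoDup; exact Sh|exact Hs|exact Hin].
      + exact C.
    - destruct b; simpl in Hb; try contradiction. subst.
      apply cstep_AInL in T as [bs' [-> Hz]]. eauto. }
  destruct bs as [|[l0 x0] bs0]; [exfalso; apply (SC_CExt_neq_nil Sh); auto|].
  destruct (Claim l0 x0) as [bs' [-> _]]; [left; auto|].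
  exists bs'. split; auto. intros l x Hin. destruct (Claim l x Hin) as [bs'' [E H]].
  injection E as <-. auto.
Qed.

(* The dual branches keep the probe compliant whichever branch of [CInt bs] gets
   committed. *)
Definition probe_CExt (l : label) (r : ctb) (bs : list (label * ctb)) : ctb :=
  CExt (map (fun p : label * ctb => (fst p, if Nat.eqb (fst p) l then r else dual (snd p))) bs).

Lemma In_probe_CExt l r bs l' r' :
  In (l', r') (map (fun p : label * ctb => (fst p, if Nat.eqb (fst p) l then r else dual (snd p))) bs) <->
  exists x', In (l', x') bs /\ r' = if Nat.eqb l' l then r else dual x'.
Proof.
  split.
  - intros H. apply in_map_iff in H as [[l3 x3] [Eq H]]. simpl in Eq.
    injection Eq as <- <-. eauto.
  - intros [x' [H ->]]. apply in_map_iff. exists (l', x'). auto.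
Qed.

Lemma SC_probe_CExt l (r : ctb) bs : SC r -> SC (CInt bs) -> SC (probe_CExt l r bs).
Proof.
  intros Sr Sh. split.
  - apply nil_iff_no_In. intros z Hz. apply in_flat_map in Hz as [[l3 r3] [H3 Hz]].
    apply In_probe_CExt in H3 as [x3 [Hx3 ->]]. cbn [snd] in Hz. destruct (Nat.eqb l3 l).
    + change (In z (ct_fv r)) in Hz. destruct Sr as [F _]. rewrite F in Hz; auto.
    + change (In z (ct_fv (dual x3))) in Hz.
      destruct (SC_dual (SC_CInt_branch _ _ Sh Hx3)) as [F _]. rewrite F in Hz; auto.
  - apply ct_ok_CExt. split; [apply map_neq_nil; apply (SC_CInt_neq_nil Sh)|split].
    + rewrite map_map. simpl. apply (SC_CInt_NoDup Sh).
    + apply Forall_forall. intros [l3 r3] H3. simpl.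
      apply In_probe_CExt in H3 as [x3 [Hx3 ->]]. destruct (Nat.eqb l3 l).
      * apply Sr.
      * apply (SC_dual (SC_CInt_branch _ _ Sh Hx3)).
Qed.

Lemma compliant_probe_CExt l x (r : ctb) bs : SC r -> SC (CInt bs) -> In (l, x) bs ->
  comp r x -> comp (probe_CExt l r bs) (CInt bs).
Proof.
  intros Sr Sh Hx C. pose proof (@SC_probe_CExt l r bs Sr Sh) as S0.
  assert (Sub : forall l' x', In (l', x') bs -> comp (probe_CExt l r bs) (CInt [(l', x')])).
  { intros l' x' H'. assert (Sx' : SC x') by (apply (SC_CInt_branch _ _ Sh H')).
    apply compliant_intro; [auto|apply SC_CInt_single; auto| |].
    - exists (if Nat.eqb l' l then r else dual x'), x'. eapply ps_sync.
      + apply cs_ext, In_probe_CExt. eauto.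
      + apply cs_outl.
      + simpl; auto.
    - intros a' b' P. inversion P as [? ? ? T|? ? ? T|? ? ? ? a1 a2 T1 T2 Hb]; subst.
      + exfalso; eapply NoTau_CExt; eauto.
      + exfalso; eapply NoTau_CInt_single; eauto.
      + destruct (proj2 (only_step_CInt_single l' x') _ _ T2) as [-> ->].
        apply cstep_CExt in T1 as [l3 [-> H3]]. simpl in Hb; subst l3.
        apply In_probe_CExt in H3 as [x3 [Hx3 ->]].
        assert (x3 = x') by (eapply In_NoDup_fst_unique; [apply (SC_CInt_NoDup Sh)|exact Hx3|exact H']).
        subst x3. destruct (Nat.eqb_spec l' l).
        * subst l'. assert (x = x')
            by (eapply In_NoDup_fst_unique; [apply (SC_CInt_NoDup Sh)|exact Hx|exact H']).
          subst; auto.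
        * apply compliant_dual_B; auto. }
  destruct (Nat.le_gt_cases (length bs) 1) as [L|L].
  - replace (CInt bs) with (CInt [(l, x)]) by (rewrite (In_single_length _ _ Hx L); reflexivity).
    apply Sub; auto.
  - apply compliant_intro; [auto|auto| |].
    + exists (probe_CExt l r bs), (CInt [(l, x)]). apply ps_r. apply cs_int; auto.
    + intros a' b' P. inversion P as [? ? ? T|? ? ? T|? ? ? ? a1 a2 T1 T2 Hb]; subst.
      * exfalso; eapply NoTau_CExt; eauto.
      * apply cstep_CInt in T as [[? [E _]]|[_ [_ [l3 [x3 [H3 ->]]]]]]; [discriminate|].
        apply Sub; auto.
      * apply cstep_CInt in T2 as [[l3 [-> E]]|[-> _]].
        -- rewrite E in L. simpl in L. lia.
        -- destruct a1; simpl in Hb; contradiction.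
Qed.

Lemma extract_CInt bs (k : ctb) : (forall r, SC r -> comp r (CInt bs) -> comp r k) ->
  SC (CInt bs) -> SC k -> not_mu k -> F_ct leb sub (CInt bs) k.
Proof.
  intros P Sh Sk Nk.
  assert (Ck : comp (CExt (map (fun p => (fst p, dual (snd p))) bs)) k)
    by exact (P _ (SC_dual Sh) (compliant_dual_B Sh)).
  assert (Ek : exists bs', k = CInt bs').
  { destruct (classic (NoTau k)) as [Nt|Nt].
    - destruct (compliant_sync Ck (@NoTau_CExt _ _) Nt)
        as [a1 [a2 [r' [z [T1 [T2 [Hb _]]]]]]]; [intros [E _]; discriminate|].
      apply cstep_CExt in T1 as [l [-> _]]. destruct a2; simpl in Hb; try contradiction.
      apply cstep_AOutL in T2. eauto.
    - apply NNPP; intros N. apply Nt. intros k' T.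
      destruct (cstep_tau T) as [[x [b E]]|[bs' [l [y [E _]]]]]; [eapply Nk; eauto|eauto]. }
  destruct Ek as [bs' ->]. exists bs'. split; auto.
  intros l y Hin.
  destruct (compliant_sync (compliant_commit _ _ Ck Hin) (@NoTau_CExt _ _)
              (@NoTau_CInt_single _ l y)) as [a1 [a2 [r' [z [T1 [T2 [Hb _]]]]]]].
  { intros [E _]; discriminate. }
  destruct (proj2 (only_step_CInt_single l y) _ _ T2) as [-> ->].
  apply cstep_CExt in T1 as [l1 [-> Hin1]]. simpl in Hb; subst l1.
  apply in_map_iff in Hin1 as [[l2 x] [Eq Hx]]. simpl in Eq. injection Eq as -> _.
  exists x. split; [exact Hx|].
  split; [apply (SC_CInt_branch _ _ Sh Hx)|split; [eapply SC_CInt_branch; eauto|]].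
  intros r Sr C.
  pose proof (compliant_commit _ _ (P _ (@SC_probe_CExt l r bs Sr Sh)
                                       (@compliant_probe_CExt l x r bs Sr Sh Hx C)) Hin) as C3.
  eapply compliant_step; [exact C3|]. eapply ps_sync.
  - apply cs_ext, In_probe_CExt. exists x. split; [exact Hx|]. rewrite Nat.eqb_refl. reflexivity.
  - apply cs_outl.
  - simpl; auto.
Qed.

Lemma extract_heads (h k : ctb) : (forall r, SC r -> comp r h -> comp r k) ->
  SC h -> not_mu h -> SC k -> not_mu k -> F_ct leb sub h k.
Proof.
  intros P Sh Nh Sk Nk.
  destruct h as [|t1 x|t1 x|c1 x|c1 x|bs|bs|x b|y].
  - exact (extract_C1 P Nk).
  - destruct (subc_prefix P Sk Nk (Sh : SC x) (fun r => COutB t1 r) Sh (only_step_CInB t1 x) I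
                (fun r Sr => Sr) (fun r => only_step_COutB t1 r) I (leb_refl t1))
      as [b [z [T [Hb Sxz]]]].
    destruct b; simpl in Hb; try contradiction. apply cstep_AInB in T as ->. simpl; eauto.
  - destruct (subc_prefix P Sk Nk (Sh : SC x) (fun r => CInB t1 r) Sh (only_step_COutB t1 x) I
                (fun r Sr => Sr) (fun r => only_step_CInB t1 r) I (leb_refl t1))
      as [b [z [T [Hb Sxz]]]].
    destruct b; simpl in Hb; try contradiction. apply cstep_AOutB in T as ->. simpl; eauto.
  - apply SC_CInC in Sh as [Sc Sx].
    destruct (subc_prefix P Sk Nk Sx (fun r => COutC c1 r) (proj2 (SC_CInC _ _) (conj Sc Sx))
                (only_step_CInC c1 x) I (fun r Sr => proj2 (SC_COutC _ _) (conj Sc Sr))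
                (fun r => only_step_COutC c1 r) I (B_refl Sc))
      as [b [z [T [Hb Sxz]]]].
    destruct b; simpl in Hb; try contradiction. apply cstep_AInC in T as ->.
    exists c, z. split; [reflexivity|split; [exact Sxz|apply B_post, Hb]].
  - apply SC_COutC in Sh as [Sc Sx].
    destruct (subc_prefix P Sk Nk Sx (fun r => CInC c1 r) (proj2 (SC_COutC _ _) (conj Sc Sx))
                (only_step_COutC c1 x) I (fun r Sr => proj2 (SC_CInC _ _) (conj Sc Sr))
                (fun r => only_step_CInC c1 r) I (B_refl Sc))
      as [b [z [T [Hb Sxz]]]].
    destruct b; simpl in Hb; try contradiction. apply cstep_AOutC in T as ->.
    exists c, z. split; [reflexivity|split; [exact Sxz|apply B_post, Hb]].
  - apply extract_CExt; auto.
  - apply extract_CInt; auto.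
  - exfalso; eapply Nh; eauto.
  - exfalso; eapply SC_not_var; eauto.
Qed.

Theorem subc_F_ct (s t : ctb) : sub s t -> F_ct leb sub (ct_unfold s) (ct_unfold t).
Proof.
  intros [Ss [St P]].
  destruct (ct_unfold_spec Ss) as [Us Nh]. destruct (ct_unfold_spec St) as [Ut Nk].
  apply extract_heads; auto using SC_ct_unfold.
  intros r Sr C. eapply compliant_unfolds_r; [|exact Ut].
  apply P; auto. eapply compliant_unfolds_back_r; eauto.
Qed.

End SubcontractHeads.

Section Correspondence.
Variable BT : Type.
Variable leb : BT -> BT -> Prop.
Hypothesis leb_preorder : PreOrder leb.

Lemma leb_trans : forall a b c, leb a b -> leb b c -> leb a c.
Proof. intros a b c; apply leb_preorder. Qed.

Lemma leb_refl : forall a, leb a a.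
Proof. apply leb_preorder. Qed.

Lemma trM_eq_C1 (V : st BT) : trM V = C1 -> V = TEnd.
Proof. destruct V; simpl; intros H; try discriminate; auto. Qed.
Lemma trM_eq_CInB (V : st BT) t z : trM V = CInB t z -> exists V2, V = TInB t V2 /\ z = trM V2.
Proof. destruct V; simpl; intros H; try discriminate. injection H; intros; subst; eauto. Qed.
Lemma trM_eq_COutB (V : st BT) t z : trM V = COutB t z -> exists V2, V = TOutB t V2 /\ z = trM V2.
Proof. destruct V; simpl; intros H; try discriminate. injection H; intros; subst; eauto. Qed.
Lemma trM_eq_CInC (V : st BT) c z : trM V = CInC c z ->
  exists V1 V2, V = TInS V1 V2 /\ c = trM V1 /\ z = trM V2.
Proof. destruct V; simpl; intros H; try discriminate. injection H; intros; subst; eauto. Qed.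
Lemma trM_eq_COutC (V : st BT) c z : trM V = COutC c z ->
  exists V1 V2, V = TOutS V1 V2 /\ c = trM V1 /\ z = trM V2.
Proof. destruct V; simpl; intros H; try discriminate. injection H; intros; subst; eauto. Qed.
Lemma trM_eq_CExt (V : st BT) bs : trM V = CExt bs ->
  exists bs0, V = TBra bs0 /\ bs = map (fun p => (fst p, trM (snd p))) bs0.
Proof. destruct V; simpl; intros H; try discriminate. injection H; intros; subst; eauto. Qed.
Lemma trM_eq_CInt (V : st BT) bs : trM V = CInt bs ->
  exists bs0, V = TSel bs0 /\ bs = map (fun p => (fst p, trM (snd p))) bs0.
Proof. destruct V; simpl; intros H; try discriminate. injection H; intros; subst; eauto. Qed.

Lemma F_le_mono (R R' : st BT -> st BT -> Prop) : (forall a b, R a b -> R' a b) ->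
  forall S T, F_le leb R S T -> F_le leb R' S T.
Proof.
  intros HR S T [A [C D]]. split; [auto|split; [auto|]].
  destruct (st_unfold S); auto.
  1-4: destruct D as [t2 [S2 [E [F G]]]]; eauto 10.
  - destruct D as [bs' [E F]]. exists bs'. split; auto. intros l Ti H.
    destruct (F l Ti H) as [Si [H1 H2]]; eauto.
  - destruct D as [bs' [E F]]. exists bs'. split; auto. intros l Si H.
    destruct (F l Si H) as [Ti [H1 H2]]; eauto.
Qed.

Lemma subtype_F_le S T : subtype leb S T -> F_le leb (subtype leb) S T.
Proof.
  intros [R [HR H]]. eapply F_le_mono; [|apply HR; exact H].
  intros a b Hab. exists R; auto.
Qed.

(* Pairs are taken up to unfolding so that the relation is closed under unfolding its
   right-hand side. *)
Definition sub_pairs (s t : ct BT) : Prop := SC s /\ SC t /\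
  exists S T, subtype leb S T /\ ct_unfold s = ct_unfold (trM S) /\ ct_unfold t = ct_unfold (trM T).

Lemma sub_pairs_trM S T : subtype leb S T -> sub_pairs (trM S) (trM T).
Proof.
  intros H. destruct (subtype_F_le H) as [A [C _]].
  split; [apply ST_iff_SC_trM; auto|split; [apply ST_iff_SC_trM; auto|]].
  exists S, T; auto.
Qed.

Lemma sub_pairs_F_ct s t : sub_pairs s t ->
  SC s /\ SC t /\ F_ct leb sub_pairs (ct_unfold s) (ct_unfold t).
Proof.
  intros [Ss [St [S [T [H [E1 E2]]]]]]. split; [auto|split; [auto|]].
  rewrite E1, E2, <- !trM_unfold.
  destruct (subtype_F_le H) as [SS [ST' D]].
  destruct (ct_unfold_spec (proj1 (ST_iff_SC_trM S) SS)) as [_ Nm].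
  pose proof (SC_ct_unfold (proj1 (ST_iff_SC_trM S) SS)) as Sv.
  rewrite <- trM_unfold in Nm, Sv.
  destruct (st_unfold S) as [|t1 S1|t1 S1|T1 S1|T1 S1|bs|bs|x b|y]; simpl.
  1: rewrite D; reflexivity.
  1-2: destruct D as [t2 [S2 [-> [F G]]]]; simpl;
       eexists; eexists; split; [reflexivity|]; split; auto; apply sub_pairs_trM; auto.
  1-2: destruct D as [T2 [S2 [-> [F G]]]]; simpl;
       eexists; eexists; split; [reflexivity|]; split; apply sub_pairs_trM; auto.
  - destruct D as [bs' [-> F]]. simpl. eexists; split; [reflexivity|].
    intros l x Hin. apply In_map_trM in Hin as [X [Hin ->]].
    destruct (F _ _ Hin) as [Y [HY HXY]]. exists (trM Y).
    split; [apply In_map_trM; eauto|apply sub_pairs_trM; auto].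
  - destruct D as [bs' [-> F]]. simpl. eexists; split; [reflexivity|].
    intros l y Hin. apply In_map_trM in Hin as [Y [Hin ->]].
    destruct (F _ _ Hin) as [X [HX HXY]]. exists (trM X).
    split; [apply In_map_trM; eauto|apply sub_pairs_trM; auto].
  - exfalso; eapply Nm; simpl; eauto.
  - exfalso; eapply SC_not_var; eauto.
Qed.

Lemma sub_pairs_unfold_r s x b : sub_pairs s (CMu x b) -> sub_pairs s (ct_subst x (CMu x b) b).
Proof.
  intros [Ss [St [S [T [H [E1 E2]]]]]]. split; [auto|split; [apply SC_unfold; auto|]].
  exists S, T. split; [auto|split; auto]. rewrite <- ct_unfold_mu; auto. apply St.
Qed.

Definition sub_preorder (a b : ct BT) : Prop := SC a /\ SC b /\ clos_refl_trans _ sub_pairs a b.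

Lemma sub_preorder_trans : forall a b c, sub_preorder a b -> sub_preorder b c -> sub_preorder a c.
Proof.
  intros a b c [A [_ C]] [_ [D E]]. split; [auto|split; [auto|]]. eapply rt_trans; eauto.
Qed.

Lemma sub_preorder_post a b : sub_preorder a b -> subc_B leb sub_preorder a b.
Proof.
  intros [Sa [_ H]]. revert Sa.
  induction H as [a b H|a|a b c H1 IH1 H2 IH2]; intros Sa.
  - destruct (sub_pairs_F_ct H) as [A [C _]]. split; [auto|split; [auto|]].
    assert (Hsub : forall x y, sub_pairs x y -> sub_preorder x y).
    { intros x y Hxy. destruct (sub_pairs_F_ct Hxy) as [E [F _]].
      split; [auto|split; [auto|]]. apply rt_step; auto. }
    intros r Sr Cr.
    exact (simulation_compliant sub_pairs leb_trans sub_preorder_trans Hsub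
             sub_pairs_F_ct sub_pairs_unfold_r b H Cr).
  - split; [auto|split; auto].
  - destruct (IH1 Sa) as [A [C D]]. destruct (IH2 C) as [_ [E F]]. split; [auto|split; [auto|]].
    intros r Sr Cr; auto.
Qed.

Theorem subtype_peer_sub S T : subtype leb S T -> peer_sub leb (trM S) (trM T).
Proof.
  intros H. exists sub_preorder. split; [|split].
  - split; [intros a b [A [C _]]; auto|split].
    + intros a Sa. split; [auto|split; [auto|apply rt_refl]].
    + apply sub_preorder_trans.
  - apply sub_preorder_post.
  - destruct (sub_pairs_trM H) as [A [C _]].
    split; [auto|split; [auto|]]. apply rt_step, sub_pairs_trM; auto.
Qed.

Definition peer_pairs (S T : st BT) : Prop := ST S /\ ST T /\
  exists B, preorder_on_SC B /\ (forall a b, B a b -> subc_B leb B a b) /\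
            subc_B leb B (trM S) (trM T).

Lemma peer_pairs_F_le S T : peer_pairs S T -> F_le leb peer_pairs S T.
Proof.
  intros [SS [ST' [B [HBpre [HBpost Hs]]]]].
  split; [auto|split; [auto|]].
  assert (F := subc_F_ct leb_refl HBpre HBpost Hs).
  rewrite <- !trM_unfold in F.
  assert (Mk : forall X Y, subc_B leb B (trM X) (trM Y) -> peer_pairs X Y).
  { intros X Y [A [C D]].
    split; [apply ST_iff_SC_trM; auto|split; [apply ST_iff_SC_trM; auto|]].
    exists B. split; [auto|split; [auto|split; [auto|split; auto]]]. }
  assert (MkB : forall X Y, B (trM X) (trM Y) -> peer_pairs X Y)
    by (intros X Y H; apply Mk, HBpost; auto).
  destruct (st_unfold S) as [|t1 S1|t1 S1|T1 S1|T1 S1|bs|bs|x b|y];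
    simpl in F |- *; auto.
  - apply trM_eq_C1; auto.
  - destruct F as [t2 [z [E [F G]]]]. apply trM_eq_CInB in E as [V2 [-> ->]]. eauto 10.
  - destruct F as [t2 [z [E [F G]]]]. apply trM_eq_COutB in E as [V2 [-> ->]]. eauto 10.
  - destruct F as [c2 [z [E [F G]]]]. apply trM_eq_CInC in E as [V1 [V2 [-> [-> ->]]]]. eauto 10.
  - destruct F as [c2 [z [E [F G]]]]. apply trM_eq_COutC in E as [V1 [V2 [-> [-> ->]]]]. eauto 10.
  - destruct F as [bs' [E F]]. apply trM_eq_CExt in E as [bs0 [-> ->]]. exists bs0. split; auto.
    intros l Ti Hin. destruct (F l (trM Ti)) as [y [Hy Hs']]; [apply In_map_trM; eauto|].
    apply In_map_trM in Hy as [Y [HY ->]]. eauto.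
  - destruct F as [bs' [E F]]. apply trM_eq_CInt in E as [bs0 [-> ->]]. exists bs0. split; auto.
    intros l Si Hin. destruct (F l (trM Si)) as [x [Hx Hs']]; [apply In_map_trM; eauto|].
    apply In_map_trM in Hx as [X [HX ->]]. eauto.
Qed.

Theorem peer_sub_subtype S T : ST S -> ST T -> peer_sub leb (trM S) (trM T) -> subtype leb S T.
Proof.
  intros SS ST' [B [HBpre [HBpost H]]]. exists peer_pairs. split; [apply peer_pairs_F_le|].
  split; [auto|split; [auto|]]. exists B. split; [auto|split; [auto|]]. apply HBpost; auto.
Qed.

End Correspondence.

Theorem mainTheorem1 (BT : Type) (leb : BT -> BT -> Prop) (Hleb : PreOrder leb)
  (S T : st BT) :
  ST S -> ST T -> (subtype leb S T <-> peer_sub leb (trM S) (trM T)).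
Proof.
  intros SS ST'. split.
  - apply subtype_peer_sub; auto.
  - apply peer_sub_subtype; auto.
Qed.
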